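(* Let $n\ge2$, let $\mathcal G_n$ be Houghton's group and $H_n=\mathrm{Stab}_{\mathcal G_n}((1,1))$. Then $H_n$ is finitely generated (indeed isomorphic to $\mathcal G_n$), $\mathcal G_n=H_n\cup H_ng_1H_n$, the Schreier coset graph $H_n\backslash\mathcal G_n$ (with respect to $S_n$) is a quasi-tree with $n$ ends and linear growth, and $H_n$ is not a virtual fiber subgroup of $\mathcal G_n$.
   Context: $X_n=\{1,\dots,n\}\times\mathbb N$. A bijection $f:X_n\to X_n$ is a translation at infinity if there are a finite $K\subseteq X_n$ and $a_1,\dots,a_n\in\mathbb Z$ with $f(i,m)=(i,m+a_i)$ for $(i,m)\notin K$; $\mathcal G_n$ is the group of all translations at infinity of $X_n$. For $i\ge1$, $g_i$ is the bijection of $\mathbb N\times\mathbb N$ given by $g_i(1,m)=(1,m-1)$ for $m>1$, $g_i(1,1)=(i+1,1)$, $g_i(i+1,m)=(i+1,m+1)$, and identity elsewhere; $\beta$ swaps $(1,1)$ and $(2,1)$ and fixes everything else. $S_n=\{g_1,\dots,g_{n-1}\}$ for $n\ge3$ and $S_2=\{g_1,\beta\}$; $S_n$ generates $\mathcal G_n$. $H$ is a virtual fiber subgroup if $H$ is finitely generated and there exist finite index $G'\le G$, $H'\le H$ with $H'\trianglelefteq G'$, $G'/H'\cong\mathbb Z$. *)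

(* concrete permutations of X_n = {1..n} x {1,2,...} as functions on nat*nat. *)
From Stdlib Require Import Arith ZArith List Lia Bool.
Import ListNotations.
Local Open Scope bool_scope.
Local Open Scope nat_scope.

Definition F : Type := nat * nat -> nat * nat.

Definition Xn (n : nat) (p : nat * nat) : Prop :=
  1 <= fst p <= n /\ 1 <= snd p.

Definition idF : F := fun p => p.
Definition comp (f g : F) : F := fun p => f (g p).

(** A bijection of X_n is represented by its extension by the identity
    outside X_n (this is a bijective correspondence). *)
Definition bij_Xn (n : nat) (f : F) : Prop :=
  (forall p, Xn n p -> Xn n (f p)) /\
  (forall p q, Xn n p -> Xn n q -> f p = f q -> p = q) /\
  (forall q, Xn n q -> exists p, Xn n p /\ f p = q) /\
  (forall p, ~ Xn n p -> f p = p).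

Definition transl_at_infinity (n : nat) (f : F) : Prop :=
  exists (K : list (nat * nat)) (a : nat -> Z),
    forall i m, 1 <= i <= n -> 1 <= m -> ~ In (i, m) K ->
      fst (f (i, m)) = i /\ Z.of_nat (snd (f (i, m))) = (Z.of_nat m + a i)%Z.

Definition Gn (n : nat) (f : F) : Prop := bij_Xn n f /\ transl_at_infinity n f.

Definition Hn (n : nat) (f : F) : Prop := Gn n f /\ f (1, 1) = (1, 1).

Definition gen_g (i : nat) : F := fun p =>
  let (a, m) := p in
  if (a =? 1) && (1 <? m) then (1, m - 1)
  else if (a =? 1) && (m =? 1) then (i + 1, 1)
  else if (a =? i + 1) && (1 <=? m) then (i + 1, m + 1)
  else p.

Definition beta : F := fun p =>
  if (fst p =? 1) && (snd p =? 1) then (2, 1)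
  else if (fst p =? 2) && (snd p =? 1) then (1, 1)
  else p.

Definition Sgen (n : nat) : list F :=
  if n =? 2 then [gen_g 1; beta] else map gen_g (seq 1 (n - 1)).

Inductive generated (L : list F) : F -> Prop :=
| gen_id : generated L idF
| gen_in : forall f, In f L -> generated L f
| gen_comp : forall f g, generated L f -> generated L g -> generated L (comp f g)
| gen_inv : forall f g, generated L f -> comp f g = idF -> comp g f = idF ->
            generated L g.

Definition fin_gen (A : F -> Prop) : Prop :=
  exists L : list F, (forall f, In f L -> A f) /\ (forall f, A f -> generated L f).

Definition is_subgroup (Big A : F -> Prop) : Prop :=
  (forall f, A f -> Big f) /\ A idF /\
  (forall f g, A f -> A g -> A (comp f g)) /\
  (forall f g, A f -> Big g -> comp f g = idF -> A g).

Definition finite_index (Big A : F -> Prop) : Prop :=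
  exists l : list F, (forall t, In t l -> Big t) /\
    forall g, Big g -> exists t h, In t l /\ A h /\ g = comp h t.

Definition normal_in (Big A : F -> Prop) : Prop :=
  forall g h, Big g -> A h -> exists h', A h' /\ comp g h = comp h' g.

Definition quotient_is_Z (Big A : F -> Prop) : Prop :=
  exists phi : F -> Z,
    (forall f g, Big f -> Big g -> phi (comp f g) = (phi f + phi g)%Z) /\
    (forall z, exists f, Big f /\ phi f = z) /\
    (forall f, Big f -> (phi f = 0%Z <-> A f)).

Definition virtual_fiber (G H : F -> Prop) : Prop :=
  fin_gen H /\
  exists G' H' : F -> Prop,
    is_subgroup G G' /\ finite_index G G' /\
    is_subgroup H H' /\ finite_index H H' /\
    (forall f, H' f -> G' f) /\ normal_in G' H' /\ quotient_is_Z G' H'.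

Definition group_iso (A B : F -> Prop) : Prop :=
  exists phi : F -> F,
    (forall f, A f -> B (phi f)) /\
    (forall f g, A f -> A g -> phi (comp f g) = comp (phi f) (phi g)) /\
    (forall f g, A f -> A g -> phi f = phi g -> f = g) /\
    (forall g, B g -> exists f, A f /\ phi f = g).

Inductive dist_le {V : Type} (E : V -> V -> Prop) : V -> V -> nat -> Prop :=
| dl_refl : forall x k, dist_le E x x k
| dl_step : forall x z y k, E x z -> dist_le E z y k -> dist_le E x y (S k).

Fixpoint chain {V : Type} (E : V -> V -> Prop) (l : list V) : Prop :=
  match l with
  | a :: ((b :: _) as t) => E a b /\ chain E t
  | _ => True
  end.

Definition is_tree {T : Type} (E : T -> T -> Prop) : Prop :=
  (forall x y, E x y -> E y x) /\ (forall x, ~ E x x) /\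
  (forall x y, exists k, dist_le E x y k) /\
  (forall (x : T) (l : list T), 2 <= length l -> NoDup (x :: l) ->
     chain E (x :: l) -> E (last l x) x -> False).

Definition quasi_isometric {V W : Type} (P : V -> Prop) (E : V -> V -> Prop)
  (Q : W -> Prop) (E' : W -> W -> Prop) : Prop :=
  exists (f : V -> W) (lam C : nat),
    (forall x, P x -> Q (f x)) /\
    (forall x y k, P x -> P y -> dist_le E x y k -> dist_le E' (f x) (f y) (lam * k + C)) /\
    (forall x y k, P x -> P y -> dist_le E' (f x) (f y) k -> dist_le E x y (lam * k + C)) /\
    (forall z, Q z -> exists x, P x /\ dist_le E' z (f x) C).

Definition quasi_tree {V : Type} (P : V -> Prop) (E : V -> V -> Prop) : Prop :=
  exists (T : Type) (ET : T -> T -> Prop),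
    is_tree ET /\ quasi_isometric P E (fun _ => True) ET.

Definition avoidE {V : Type} (E : V -> V -> Prop) (K : list V) : V -> V -> Prop :=
  fun a b => E a b /\ ~ In a K /\ ~ In b K.

Definition comp_of {V : Type} (E : V -> V -> Prop) (K : list V) (x y : V) : Prop :=
  ~ In x K /\ exists k, dist_le (avoidE E K) x y k.

Definition in_infinite_comp {V : Type} (P : V -> Prop) (E : V -> V -> Prop)
  (K : list V) (x : V) : Prop :=
  P x /\ ~ In x K /\ ~ (exists l : list V, forall y, comp_of E K x y -> In y l).

(** the graph has exactly e ends: sup over finite K of the number of
    infinite components of the complement of K equals e *)
Definition has_ends {V : Type} (P : V -> Prop) (E : V -> V -> Prop) (e : nat) : Prop :=
  (exists K : list V, (forall v, In v K -> P v) /\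
     exists xs : list V, length xs = e /\
       (forall x, In x xs -> in_infinite_comp P E K x) /\
       ForallOrdPairs (fun x y => ~ comp_of E K x y) xs) /\
  (forall K : list V, (forall v, In v K -> P v) ->
     forall xs : list V,
       (forall x, In x xs -> in_infinite_comp P E K x) ->
       ForallOrdPairs (fun x y => ~ comp_of E K x y) xs ->
       length xs <= e).

Definition linear_growth {V : Type} (E : V -> V -> Prop) (x0 : V) : Prop :=
  exists C : nat, forall r : nat,
    (exists l : list V, NoDup l /\ length l = S r /\ forall y, In y l -> dist_le E x0 y r) /\
    (forall l : list V, NoDup l -> (forall y, In y l -> dist_le E x0 y r) ->
       length l <= C * S r).

Definition coset (n : nat) (g : F) : F -> Prop :=
  fun f => exists h, Hn n h /\ f = comp h g.

Definition is_coset (n : nat) (C : F -> Prop) : Prop :=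
  exists g, Gn n g /\ C = coset n g.

Definition schreier (n : nat) (C D : F -> Prop) : Prop :=
  exists g s, Gn n g /\ In s (Sgen n) /\
    ((C = coset n g /\ D = coset n (comp g s)) \/
     (D = coset n g /\ C = coset n (comp g s))).

(* Deleting the base point (1,1) and sliding ray 1 down by one identifies X_n minus the base
   point with X_n, which turns the stabiliser H_n into a copy of G_n. H_n is generated by the
   copies of the g_i and by one transposition: the translation amounts at infinity of an element
   can be cancelled ray by ray with powers of these copies, leaving a permutation of finite
   support, which is a product of transpositions of points other than (1,1).

   The coset H_n g is determined by the point g^-1 (1,1), so the Schreier graph is the graph on
   X_n joining p to s p for s in S_n. Each generator moves a point at most one step in the tree
   formed by ray 1 and the other rays attached at (1,1); hence the Schreier graph is that tree
   with loops added. Its ends are the n rays, and the ball of radius r lies between the first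
   r+1 points of ray 1 and the box of height r+1.

   A finite-index subgroup G' of G_n contains a nontrivial rotation of an initial segment of ray
   1 (pigeonhole on cosets). Having finite order, it dies in G'/H' = Z, so it would lie in
   H' <= H_n although it moves (1,1): H_n is not a virtual fiber. *)

From Stdlib Require Import Arith ZArith List.
From Stdlib Require Import Lia Bool FunctionalExtensionality PropExtensionality.
From Stdlib Require Import Classical ClassicalEpsilon Permutation.
Import ListNotations.

Lemma dist_le_mono {V} (E : V -> V -> Prop) x y k k' :
  dist_le E x y k -> k <= k' -> dist_le E x y k'.
Proof.
  intros H; revert k'; induction H; intros k' Hk.
  - constructor.
  - destruct k' as [|k']; [lia|]. econstructor; eauto. apply IHdist_le; lia.
Qed.

Lemma dist_le_trans {V} (E : V -> V -> Prop) x y z k1 k2 :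
  dist_le E x y k1 -> dist_le E y z k2 -> dist_le E x z (k1 + k2).
Proof.
  intros H; induction H; intros H2.
  - eapply dist_le_mono; eauto; lia.
  - simpl. econstructor; eauto.
Qed.

Lemma dist_le_snoc {V} (E : V -> V -> Prop) x y z k :
  dist_le E x y k -> E y z -> dist_le E x z (S k).
Proof.
  intros H1 H2. replace (S k) with (k + 1) by lia.
  eapply dist_le_trans; eauto. econstructor; eauto. constructor.
Qed.

Lemma dist_le_sym {V} (E : V -> V -> Prop) x y k :
  (forall a b, E a b -> E b a) -> dist_le E x y k -> dist_le E y x k.
Proof.
  intros Hs H; induction H.
  - constructor.
  - eapply dist_le_snoc; eauto.
Qed.

Lemma dist_le_map {V W} (E : V -> V -> Prop) (E' : W -> W -> Prop) (f : V -> W) x y k :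
  (forall a b, E a b -> E' (f a) (f b)) -> dist_le E x y k -> dist_le E' (f x) (f y) k.
Proof.
  intros Hm H; induction H.
  - constructor.
  - econstructor; eauto.
Qed.

Lemma dist_le_weaken {V} (E E' : V -> V -> Prop) x y k :
  (forall a b, E a b -> E' a b) -> dist_le E x y k -> dist_le E' x y k.
Proof. intros. apply (dist_le_map E E' (fun v => v)); auto. Qed.

Lemma dist_le_drop_loops {V} (E E' : V -> V -> Prop) x y k :
  (forall a b, E a b -> a = b \/ E' a b) -> dist_le E x y k -> dist_le E' x y k.
Proof.
  intros Hm H; induction H.
  - constructor.
  - destruct (Hm _ _ H) as [->|He].
    + eapply dist_le_mono; eauto.
    + econstructor; eauto.
Qed.

Lemma dist_le_pullback {V T} (c : T -> V) (E : V -> V -> Prop) (ET : T -> T -> Prop)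
  (Q : T -> Prop) :
  (forall C D, E C D -> exists a b, Q a /\ Q b /\ C = c a /\ D = c b /\ ET a b) ->
  (forall a b, Q a -> Q b -> c a = c b -> a = b) ->
  forall x y k, dist_le E x y k -> forall a, Q a -> x = c a ->
    exists b, Q b /\ y = c b /\ dist_le ET a b k.
Proof.
  intros HE Hi x y k H; induction H; intros a Qa ->.
  - exists a; repeat split; auto. constructor.
  - destruct (HE _ _ H) as (a' & b & Qa' & Qb & E1 & E2 & Eab).
    apply Hi in E1; auto. subst a'.
    destruct (IHdist_le b Qb E2) as (b' & Qb' & -> & Hd).
    exists b'; repeat split; auto. econstructor; eauto.
Qed.

Definition box (n M : nat) : list (nat * nat) := list_prod (seq 1 n) (seq 1 M).

Lemma in_box n M i m : In (i, m) (box n M) <-> 1 <= i <= n /\ 1 <= m <= M.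
Proof. unfold box. rewrite in_prod_iff, !in_seq. lia. Qed.

Lemma box_length n M : length (box n M) = n * M.
Proof. unfold box. rewrite length_prod, !length_seq. reflexivity. Qed.

Lemma NoDup_list_prod {A B} (l1 : list A) (l2 : list B) :
  NoDup l1 -> NoDup l2 -> NoDup (list_prod l1 l2).
Proof.
  induction l1 as [|a l1 IH]; simpl; intros H1 H2; [constructor|].
  inversion H1; subst. apply NoDup_app; auto.
  - apply NoDup_map_NoDup_ForallPairs; auto. intros x y _ _ H; inversion H; auto.
  - intros x Hx Hx2. apply in_map_iff in Hx as (b & <- & _).
    apply in_prod_iff in Hx2 as [Ha _]. contradiction.
Qed.

Lemma box_NoDup n M : NoDup (box n M).
Proof. apply NoDup_list_prod; apply seq_NoDup. Qed.

Lemma ForallOrdPairs_map_seq {A} (R : A -> A -> Prop) (g : nat -> A) start len :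
  (forall i j, start <= i < j -> j < start + len -> R (g i) (g j)) ->
  ForallOrdPairs R (map g (seq start len)).
Proof.
  revert start; induction len as [|len IH]; intros start H; simpl; constructor.
  - apply Forall_forall. intros y Hy. apply in_map_iff in Hy as (j & <- & Hj).
    apply in_seq in Hj. apply H; lia.
  - apply IH. intros; apply H; lia.
Qed.

Lemma ForallOrdPairs_length_le_colours {A C} (eq_dec : forall c c' : C, {c = c'} + {c <> c'})
  (R : A -> A -> Prop) (colour : A -> C -> Prop) (xs : list A) :
  ForallOrdPairs R xs ->
  (forall x y c, colour x c -> colour y c -> ~ R x y) ->
  forall cs, (forall x, In x xs -> exists c, In c cs /\ colour x c) -> length xs <= length cs.
Proof.
  intros Hxs Hcol. induction Hxs as [|x xs Hx Hxs IH]; intros cs Hcs; simpl; [lia|].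
  destruct (Hcs x (or_introl eq_refl)) as (c & Hc & Hxc).
  assert (length xs <= length (remove eq_dec c cs)); [|pose proof (remove_length_lt eq_dec cs c Hc); lia].
  apply IH. intros y Hy. destruct (Hcs y (or_intror Hy)) as (c' & Hc' & Hyc').
  exists c'. split; [|auto]. apply in_in_remove; [|auto].
  intros ->. rewrite Forall_forall in Hx. exact (Hcol x y c Hxc Hyc' (Hx y Hy)).
Qed.

Lemma pigeonhole_seq {A} (g : nat -> A) (l : list A) N :
  length l < N -> (forall j, j < N -> In (g j) l) -> exists i j, i < j < N /\ g i = g j.
Proof.
  intros Hl H. apply NNPP. intros Hno.
  assert (Hnd : NoDup (map g (seq 0 N))).
  { apply NoDup_map_NoDup_ForallPairs; [|apply seq_NoDup].
    intros a b Ha Hb E. apply in_seq in Ha; apply in_seq in Hb.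
    destruct (lt_eq_lt_dec a b) as [[Hab|Hab]|Hab]; auto; exfalso; apply Hno.
    - exists a, b; split; [lia|auto].
    - exists b, a; split; [lia|auto]. }
  assert (Hinc : incl (map g (seq 0 N)) l).
  { intros y Hy. apply in_map_iff in Hy as (j & <- & Hj). apply in_seq in Hj. apply H; lia. }
  pose proof (NoDup_incl_length Hnd Hinc) as Hlen. rewrite length_map, length_seq in Hlen. lia.
Qed.

(** * Trees given by a parent map *)

Lemma last_cons {A} (l : list A) a c : last (c :: l) a = last l c.
Proof.
  revert a c; induction l as [|d l IH]; intros a c; [reflexivity|].
  change (last (c :: d :: l) a) with (last (d :: l) a). rewrite !IH. reflexivity.
Qed.

Lemma last_In {A} (l : list A) d : l <> [] -> In (last l d) l.
Proof.
  induction l as [|b l IH]; [congruence|]. intros _. rewrite last_cons.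
  destruct l as [|c l]; [left; reflexivity|]. right. rewrite <- last_cons with (a := d).
  apply IH; congruence.
Qed.

Lemma chain_snoc {V} (E : V -> V -> Prop) l a b :
  chain E (a :: l ++ [b]) <-> chain E (a :: l) /\ E (last l a) b.
Proof.
  revert a; induction l as [|c l IH]; intros a.
  - simpl; tauto.
  - rewrite <- app_comm_cons. change (chain E (a :: c :: l ++ [b])) with (E a c /\ chain E (c :: l ++ [b])).
    rewrite IH, last_cons. simpl. tauto.
Qed.

Definition closed_walk {V} (E : V -> V -> Prop) (w : list V) : Prop :=
  match w with [] => True | a :: l => chain E (a :: l ++ [a]) end.

Lemma closed_walk_rotate1 {V} (E : V -> V -> Prop) a l :
  closed_walk E (a :: l) -> closed_walk E (l ++ [a]).
Proof.
  destruct l as [|c l]; [simpl; auto|]. simpl. intros [Hac Hc].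
  apply chain_snoc. split; auto. rewrite last_last; auto.
Qed.

Lemma closed_walk_rotate {V} (E : V -> V -> Prop) a b :
  closed_walk E (a ++ b) -> closed_walk E (b ++ a).
Proof.
  revert b; induction a as [|x a IH]; intros b H.
  - rewrite app_nil_r; auto.
  - apply closed_walk_rotate1 in H. rewrite <- app_assoc in H. apply IH in H.
    rewrite <- app_assoc in H. exact H.
Qed.

Lemma exists_max_by {V} (w : V -> nat) (l : list V) x :
  exists y, In y (x :: l) /\ forall z, In z (x :: l) -> w z <= w y.
Proof.
  induction l as [|a l (y & Hy & Hmax)].
  - exists x; split; [left; auto|]. intros z [<-|[]]; auto.
  - destruct (le_lt_dec (w a) (w y)).
    + exists y; split; [destruct Hy as [<-|Hy]; [left|right; right]; auto|].
      intros z [Hz|[Hz|Hz]]; subst; try lia; apply Hmax; simpl; auto.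
    + exists a; split; [right; left; auto|].
      intros z [Hz|[Hz|Hz]]; subst; try lia.
      * specialize (Hmax z (or_introl eq_refl)); lia.
      * specialize (Hmax z (or_intror Hz)); lia.
Qed.

Section ParentTree.
Variables (T : Type) (root : T) (parent : T -> T) (depth : T -> nat).
Hypothesis depth_parent : forall p, p <> root -> depth (parent p) + 1 = depth p.

Definition parent_edge (p q : T) : Prop :=
  (p <> root /\ q = parent p) \/ (q <> root /\ p = parent q).

Lemma parent_edge_sym p q : parent_edge p q -> parent_edge q p.
Proof. unfold parent_edge; tauto. Qed.

Lemma dist_le_root k : forall p, depth p <= k -> dist_le parent_edge p root k.
Proof.
  induction k as [|k IH]; intros p Hp;
    (destruct (classic (p = root)) as [->|Hr]; [constructor|]);
    specialize (depth_parent p Hr); [lia|].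
  apply dl_step with (parent p); [left; auto|]. apply IH. lia.
Qed.

(* A closed walk without repetitions must turn back at a vertex of maximal depth, where both
   neighbours are forced to be its parent. *)
Lemma parent_edge_no_cycle (x : T) (l : list T) :
  2 <= length l -> NoDup (x :: l) -> closed_walk parent_edge (x :: l) -> False.
Proof.
  intros Hlen Hnd Hc.
  destruct (exists_max_by depth l x) as (y & Hy & Hmax).
  destruct (in_split _ _ Hy) as (a & b & Eab).
  rewrite Eab in Hc, Hnd. apply closed_walk_rotate in Hc. simpl app in Hc.
  assert (Hnd' : NoDup (y :: b ++ a)).
  { apply (Permutation_NoDup (l := a ++ y :: b)); auto. apply (Permutation_app_comm a (y :: b)). }
  assert (Hlen' : length (b ++ a) >= 2).
  { assert (length (x :: l) = length (a ++ y :: b)) by (rewrite Eab; auto).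
    rewrite length_app in *. simpl in *. lia. }
  assert (Hin : forall z, In z (b ++ a) -> depth z <= depth y).
  { intros z Hz. apply Hmax. rewrite Eab. rewrite in_app_iff in Hz |- *. simpl. tauto. }
  destruct (b ++ a) as [|z m'] eqn:Em; [simpl in Hlen'; lia|].
  assert (Hm' : m' <> []) by (intros ->; simpl in Hlen'; lia).
  simpl in Hc. destruct Hc as [Eyz Hc]. apply chain_snoc in Hc as [_ Ewy].
  assert (Hz1 : z = parent y).
  { destruct Eyz as [[_ E]|[Hz E]]; auto.
    specialize (depth_parent z Hz). specialize (Hin z (or_introl eq_refl)). subst; lia. }
  assert (Hw1 : last m' z = parent y).
  { destruct Ewy as [[Hw E]|[_ E]]; auto.
    specialize (depth_parent _ Hw). specialize (Hin _ (or_intror (last_In m' z Hm'))). subst; lia. }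
  inversion Hnd' as [|? ? _ Hnd2]. inversion Hnd2 as [|? ? Hz _].
  apply Hz. rewrite Hz1, <- Hw1. apply last_In; auto.
Qed.

Lemma parent_edge_is_tree : is_tree parent_edge.
Proof.
  split; [exact parent_edge_sym|split; [|split]].
  - intros x [[Hx E]|[Hx E]]; specialize (depth_parent x Hx); rewrite <- E in depth_parent; lia.
  - intros x y. exists (depth x + depth y).
    apply dist_le_trans with root; [apply dist_le_root; auto|].
    apply dist_le_sym; [exact parent_edge_sym|apply dist_le_root; auto].
  - intros x l Hlen Hnd Hch Hcl. apply (parent_edge_no_cycle x l); auto.
    apply chain_snoc; auto.
Qed.

End ParentTree.

Ltac destruct_tests := repeat match goal with
 | |- context [Nat.eqb ?a ?b] => destruct (Nat.eqb_spec a b)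
 | |- context [Nat.ltb ?a ?b] => destruct (Nat.ltb_spec a b)
 | |- context [Nat.leb ?a ?b] => destruct (Nat.leb_spec a b)
 | H : context [Nat.eqb ?a ?b] |- _ => destruct (Nat.eqb_spec a b)
 | H : context [Nat.ltb ?a ?b] |- _ => destruct (Nat.ltb_spec a b)
 | H : context [Nat.leb ?a ?b] |- _ => destruct (Nat.leb_spec a b)
 end.

Lemma pair_neq (a b c d : nat) : (a, b) <> (c, d) -> a <> c \/ b <> d.
Proof. intros H. destruct (Nat.eq_dec a c); [subst; right; congruence|left; auto]. Qed.

Lemma pair_neq_intro (a b c d : nat) : a <> c \/ b <> d -> (a, b) <> (c, d).
Proof. intros [H|H] E; inversion E; auto. Qed.

Ltac split_pairs := repeat match goal with
 | H : (_, _) <> (_, _) |- _ => apply pair_neq in H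
 | p : (nat * nat)%type |- _ => destruct p
 | H : (_, _) = (_, _) |- _ => injection H as; subst
 | H : _ /\ _ |- _ => destruct H
 end.

Ltac close_goal := first [ reflexivity | (apply pair_neq_intro; lia) | congruence | lia
  | (f_equal; lia) | (split; lia) | (intuition lia) | (intuition congruence) ].

Ltac crush := intros;
  repeat (progress (cbn [fst snd andb orb negb] in *; split_pairs; destruct_tests; subst));
  try close_goal.

Lemma bij_Xn_injective n f p q : bij_Xn n f -> f p = f q -> p = q.
Proof.
  intros (Hm & Hi & Hs & Ho) E.
  destruct (classic (Xn n p)) as [Xp|Xp]; destruct (classic (Xn n q)) as [Xq|Xq].
  - auto.
  - rewrite (Ho q Xq) in E. exfalso; apply Xq; rewrite <- E; auto.
  - rewrite (Ho p Xp) in E. exfalso; apply Xp; rewrite E; auto.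
  - rewrite (Ho p Xp), (Ho q Xq) in E; auto.
Qed.

Lemma bij_Xn_surjective n f q : bij_Xn n f -> exists p, f p = q.
Proof.
  intros (Hm & Hi & Hs & Ho).
  destruct (classic (Xn n q)) as [Xq|Xq].
  - destruct (Hs q Xq) as (p & _ & E); eauto.
  - exists q; auto.
Qed.

Lemma bij_Xn_of_inverse n f g :
  (forall p, Xn n p -> Xn n (f p)) -> (forall p, f (g p) = p) -> (forall p, g (f p) = p) ->
  (forall p, ~ Xn n p -> f p = p) -> bij_Xn n f.
Proof.
  intros Hm Hfg Hgf Ho. split; [auto|split; [|split; [|auto]]].
  - intros p0 q _ _ E. rewrite <- (Hgf p0), <- (Hgf q), E; auto.
  - intros q Xq. exists (g q); split; auto.
    destruct (classic (Xn n (g q))) as [H|H]; auto.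
    assert (E := Hfg q). rewrite (Ho _ H) in E. rewrite E in H. contradiction.
Qed.

Lemma bij_Xn_inverse n f : bij_Xn n f ->
  exists g, bij_Xn n g /\ (forall q, f (g q) = q) /\ (forall p, g (f p) = p).
Proof.
  intros Bf.
  assert (Hs : forall q, exists p, f p = q) by (intros; eapply bij_Xn_surjective; eauto).
  set (g := fun q => proj1_sig (constructive_indefinite_description _ (Hs q))).
  assert (Hfg : forall q, f (g q) = q).
  { intros q. unfold g. destruct (constructive_indefinite_description _ _); auto. }
  assert (Hgf : forall p, g (f p) = p) by (intros p; apply (bij_Xn_injective n f); auto).
  exists g. split; [|auto].
  destruct Bf as (Hm & _ & _ & Ho). apply (bij_Xn_of_inverse n g f); auto.
  - intros p Xp. destruct (classic (Xn n (g p))) as [H|H]; auto.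
    assert (E := Ho _ H); rewrite Hfg in E; rewrite <- E in H; contradiction.
  - intros p Xp. destruct (classic (Xn n (g p))) as [H|H].
    + apply Hm in H. rewrite Hfg in H. contradiction.
    + transitivity (f (g p)); [symmetry; apply Ho; auto | apply Hfg].
Qed.

Definition eventual_shift (n : nat) (f : F) (a : nat -> Z) : Prop :=
  exists M, forall i m, 1 <= i <= n -> M < m ->
    fst (f (i, m)) = i /\ Z.of_nat (snd (f (i, m))) = (Z.of_nat m + a i)%Z.

Lemma transl_at_infinity_iff n f : transl_at_infinity n f <-> exists a, eventual_shift n f a.
Proof.
  split.
  - intros (K & a & H). exists a, (list_max (map snd K)). intros i m Hi Hm. apply H; try lia.
    intros Hin. assert (Hle := proj1 (list_max_le (map snd K) _) (le_n _)).
    rewrite Forall_forall in Hle. specialize (Hle m (in_map snd _ _ Hin)). lia.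
  - intros (a & M & H). exists (box n M), a. intros i m Hi Hm Hin.
    apply H; auto. destruct (le_lt_dec m M); auto. exfalso; apply Hin, in_box; lia.
Qed.

Lemma shift_bound n (a : nat -> Z) : exists B, forall i, 1 <= i <= n -> Z.abs_nat (a i) <= B.
Proof.
  exists (list_max (map (fun i => Z.abs_nat (a i)) (seq 1 n))). intros i Hi.
  assert (Hle := proj1 (list_max_le (map (fun i => Z.abs_nat (a i)) (seq 1 n)) _) (le_n _)).
  rewrite Forall_forall in Hle. apply Hle, (in_map (fun i => Z.abs_nat (a i))), in_seq. lia.
Qed.

Lemma eventual_shift_ext n f a b :
  (forall i, 1 <= i <= n -> a i = b i) -> eventual_shift n f a -> eventual_shift n f b.
Proof. intros He [M H]; exists M; intros i m Hi Hm. rewrite <- He; auto. Qed.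

Lemma eventual_shift_id n : eventual_shift n idF (fun _ => 0%Z).
Proof. exists 0; intros i m _ _; unfold idF; simpl; split; [reflexivity|lia]. Qed.

Lemma eventual_shift_comp n f g a b : eventual_shift n f a -> eventual_shift n g b ->
  eventual_shift n (comp f g) (fun i => (a i + b i)%Z).
Proof.
  intros (M1 & H1) (M2 & H2). destruct (shift_bound n b) as [B HB].
  exists (M1 + M2 + B). intros i m Hi Hm. unfold comp.
  destruct (H2 i m Hi ltac:(lia)) as [E1 E2].
  destruct (g (i, m)) as [i' m'] eqn:Eg. simpl in *. subst i'.
  specialize (HB i Hi).
  destruct (H1 i m' Hi) as [E3 E4]; [lia|]. split; auto. lia.
Qed.

Lemma eventual_shift_inverse n f g a :
  eventual_shift n f a -> (forall p, g (f p) = p) -> eventual_shift n g (fun i => (- a i)%Z).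
Proof.
  intros [M Ha] Hgf. destruct (shift_bound n a) as [B HB].
  exists (M + B). intros i m' Hi Hm'. specialize (HB i Hi).
  set (m := Z.to_nat (Z.of_nat m' - a i)).
  destruct (Ha i m Hi) as [E1 E2]; [lia|].
  destruct (f (i, m)) as [i1 m1] eqn:Ef. simpl in *. subst i1.
  assert (m1 = m') by lia. subst m1.
  rewrite <- Ef, Hgf. simpl. split; auto. lia.
Qed.

Lemma Gn_id n : Gn n idF.
Proof.
  split.
  - apply (bij_Xn_of_inverse n _ idF); unfold idF; auto.
  - apply transl_at_infinity_iff. eexists; apply eventual_shift_id.
Qed.

Lemma Gn_comp n f g : Gn n f -> Gn n g -> Gn n (comp f g).
Proof.
  intros [Bf Tf] [Bg Tg]. split.
  - destruct Bf as (Hm1 & Hi1 & Hs1 & Ho1), Bg as (Hm2 & Hi2 & Hs2 & Ho2).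
    unfold comp; split; [|split; [|split]].
    + intros p Xp; auto.
    + intros p q Xp Xq E. apply Hi2; auto; apply Hi1; auto.
    + intros q Xq. destruct (Hs1 q Xq) as (r & Xr & Er). destruct (Hs2 r Xr) as (p & Xp & Ep).
      exists p; subst; auto.
    + intros p Xp. rewrite Ho2, Ho1; auto.
  - apply transl_at_infinity_iff in Tf as [a Ha]. apply transl_at_infinity_iff in Tg as [b Hb].
    apply transl_at_infinity_iff. eexists; apply eventual_shift_comp; eauto.
Qed.

Lemma Gn_inv n f : Gn n f -> exists g, Gn n g /\ comp f g = idF /\ comp g f = idF.
Proof.
  intros [Bf Tf]. destruct (bij_Xn_inverse n f Bf) as (g & Bg & Hfg & Hgf).
  apply transl_at_infinity_iff in Tf as [a Ha].
  exists g. split; [split|split; extensionality q; [apply Hfg|apply Hgf]]; auto.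
  apply transl_at_infinity_iff. eexists. apply (eventual_shift_inverse n f); eauto.
Qed.

Lemma Hn_id n : Hn n idF.
Proof. split; [apply Gn_id|reflexivity]. Qed.

Lemma Hn_comp n f g : Hn n f -> Hn n g -> Hn n (comp f g).
Proof. intros [Gf Ef] [Gg Eg]; split; [apply Gn_comp; auto|unfold comp; rewrite Eg; auto]. Qed.

Lemma Hn_inv n f : Hn n f -> exists g, Hn n g /\ comp f g = idF /\ comp g f = idF.
Proof.
  intros [Gf Ho]. destruct (Gn_inv n f Gf) as (g & Gg & E1 & E2).
  exists g; split; [split; [exact Gg|]|split; auto].
  assert (E := equal_f E2 (1, 1)). unfold comp, idF in E. rewrite Ho in E. auto.
Qed.

Lemma Hn_moves_off_base n f x : Hn n f -> x <> (1, 1) -> f x <> (1, 1).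
Proof. intros [[Bf _] Ho] Hx E. apply Hx. apply (bij_Xn_injective n f); auto. congruence. Qed.

Fixpoint fpow (f : F) (k : nat) : F := match k with 0 => idF | S k => comp f (fpow f k) end.

Lemma fpow_S_r f k : fpow f (S k) = comp (fpow f k) f.
Proof.
  induction k; [reflexivity|].
  change (comp f (fpow f (S k)) = comp (comp f (fpow f k)) f). rewrite IHk. reflexivity.
Qed.

Lemma fpow_inverse f g k : comp f g = idF -> comp (fpow f k) (fpow g k) = idF.
Proof.
  intros H; induction k; [reflexivity|].
  rewrite (fpow_S_r g). change (comp f (comp (comp (fpow f k) (fpow g k)) g) = idF).
  rewrite IHk. exact H.
Qed.

Lemma eventual_shift_fpow n f a k :
  eventual_shift n f a -> eventual_shift n (fpow f k) (fun j => (Z.of_nat k * a j)%Z).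
Proof.
  intros H. induction k.
  - eapply eventual_shift_ext; [|apply eventual_shift_id]. intros; simpl; ring.
  - eapply eventual_shift_ext; [|apply eventual_shift_comp; eauto].
    intros; cbv beta; rewrite Nat2Z.inj_succ; ring.
Qed.

Lemma Hn_fpow n f k : Hn n f -> Hn n (fpow f k).
Proof. intros H; induction k; simpl; [apply Hn_id|apply Hn_comp; auto]. Qed.

Definition point_eqb (p q : nat * nat) : bool := (fst p =? fst q) && (snd p =? snd q).

Lemma point_eqb_spec p q : reflect (p = q) (point_eqb p q).
Proof.
  apply iff_reflect. destruct p, q; unfold point_eqb; simpl.
  rewrite andb_true_iff, !Nat.eqb_eq. split; intros H; [injection H; auto|destruct H; subst; auto].
Qed.

Definition swap (a b : nat * nat) : F := fun x =>
  if point_eqb x a then b else if point_eqb x b then a else x.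

Lemma swap_l a b : swap a b a = b.
Proof. unfold swap. destruct (point_eqb_spec a a); congruence. Qed.

Lemma swap_r a b : swap a b b = a.
Proof. unfold swap. destruct (point_eqb_spec b a); destruct (point_eqb_spec b b); congruence. Qed.

Lemma swap_other a b x : x <> a -> x <> b -> swap a b x = x.
Proof. unfold swap. destruct (point_eqb_spec x a); destruct (point_eqb_spec x b); congruence. Qed.

Lemma swap_involutive a b : comp (swap a b) (swap a b) = idF.
Proof.
  extensionality x. unfold comp, idF.
  destruct (point_eqb_spec x a); [subst; rewrite swap_l, swap_r; auto|].
  destruct (point_eqb_spec x b); [subst; rewrite swap_r, swap_l; auto|].
  rewrite !(swap_other a b x); auto.
Qed.

Lemma swap_diag a : swap a a = idF.
Proof.
  extensionality x. unfold idF.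
  destruct (point_eqb_spec x a); [subst; apply swap_l|apply swap_other; auto].
Qed.

Lemma swap_comm a b : swap a b = swap b a.
Proof.
  extensionality x.
  destruct (point_eqb_spec x a); [subst; rewrite swap_l, swap_r; auto|].
  destruct (point_eqb_spec x b); [subst; rewrite swap_l, swap_r; auto|].
  rewrite (swap_other a b x), (swap_other b a x); auto.
Qed.

Lemma conj_swap t u a b : comp t u = idF -> comp u t = idF ->
  comp t (comp (swap a b) u) = swap (t a) (t b).
Proof.
  intros H1 H2. extensionality x. unfold comp.
  assert (tu : forall y, t (u y) = y) by (intros y; exact (equal_f H1 y)).
  assert (ut : forall y, u (t y) = y) by (intros y; exact (equal_f H2 y)).
  destruct (point_eqb_spec (u x) a) as [E|E].
  - rewrite E, swap_l, <- E, tu, swap_l. auto.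
  - destruct (point_eqb_spec (u x) b) as [E'|E'].
    + rewrite E', swap_r, <- E', tu, swap_r. auto.
    + rewrite swap_other, tu by auto. rewrite swap_other; auto.
      * intros ->. apply E; auto.
      * intros ->. apply E'; auto.
Qed.

Lemma Gn_swap n a b : Xn n a -> Xn n b -> Gn n (swap a b).
Proof.
  intros Xa Xb. split.
  - apply (bij_Xn_of_inverse n _ (swap a b)).
    + intros x Xx. destruct (point_eqb_spec x a); [subst; rewrite swap_l; auto|].
      destruct (point_eqb_spec x b); [subst; rewrite swap_r; auto|]. rewrite swap_other; auto.
    + intros x. exact (equal_f (swap_involutive a b) x).
    + intros x. exact (equal_f (swap_involutive a b) x).
    + intros x Xx. apply swap_other; intros ->; auto.
  - apply transl_at_infinity_iff. exists (fun _ => 0%Z), (snd a + snd b). intros i m Hi Hm.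
    rewrite swap_other; [simpl; split; auto; lia|intros E; subst; simpl in *; lia..].
Qed.

Lemma Hn_swap n a b : Xn n a -> Xn n b -> a <> (1, 1) -> b <> (1, 1) -> Hn n (swap a b).
Proof. intros; split; [apply Gn_swap; auto|apply swap_other; auto]. Qed.

Definition gen_g_inv (i : nat) : F := fun p => let (a, m) := p in
  if (a =? 1) && (1 <=? m) then (1, m + 1)
  else if (a =? i + 1) && (m =? 1) then (1, 1)
  else if (a =? i + 1) && (2 <=? m) then (i + 1, m - 1)
  else p.

Lemma Gn_gen_g n i : 1 <= i -> i + 1 <= n -> Gn n (gen_g i).
Proof.
  intros H1 H2. split.
  - apply (bij_Xn_of_inverse n _ (gen_g_inv i)); intros [a m]; unfold Xn, gen_g, gen_g_inv; crush.
  - apply transl_at_infinity_iff.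
    exists (fun j => if j =? 1 then (-1)%Z else if j =? i + 1 then 1%Z else 0%Z), 1.
    intros j m Hj Hm. unfold gen_g; crush.
Qed.

Lemma Gn_beta n : 2 <= n -> Gn n beta.
Proof.
  intros H2. split.
  - apply (bij_Xn_of_inverse n _ beta); intros [a m]; unfold Xn, beta; crush.
  - apply transl_at_infinity_iff. exists (fun _ => 0%Z), 1.
    intros j m Hj Hm. unfold beta; crush.
Qed.

Lemma Sgen_Gn n s : In s (Sgen n) -> Gn n s.
Proof.
  unfold Sgen. destruct (Nat.eqb_spec n 2) as [->|Hn2].
  - simpl. intros [<-|[<-|[]]]; [apply Gn_gen_g; lia|apply Gn_beta; lia].
  - intros H. apply in_map_iff in H as (i & <- & Hi). apply in_seq in Hi. apply Gn_gen_g; lia.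
Qed.

Lemma gen_g_in_Sgen n j : 1 <= j <= n - 1 -> In (gen_g j) (Sgen n).
Proof.
  intros Hj. unfold Sgen. destruct (Nat.eqb_spec n 2) as [->|Hn2].
  - replace j with 1 by lia. left; auto.
  - apply in_map, in_seq; lia.
Qed.

Lemma Sgen_cases n s : In s (Sgen n) -> (exists i, 1 <= i /\ i + 1 <= n /\ s = gen_g i) \/ s = beta.
Proof.
  unfold Sgen. destruct (Nat.eqb_spec n 2) as [->|Hn2].
  - intros [<-|[<-|[]]]; [left; exists 1; repeat split; lia|right; auto].
  - intros Hs. apply in_map_iff in Hs as (i & <- & Hi). apply in_seq in Hi.
    left; exists i; repeat split; lia.
Qed.

(** * Finite generation of the stabiliser *)

(* [h_gen i] is [g_(i-1)] acting on [X_n] minus the base point [(1,1)], with ray 1 starting at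
   [(1,2)]; [h_swap i] swaps the first points of rays 1 and [i] there. *)
Definition h_gen (i : nat) : F := fun p => let (a, m) := p in
  if (a =? 1) && (3 <=? m) then (1, m - 1)
  else if (a =? 1) && (m =? 2) then (i, 1)
  else if (a =? i) && (1 <=? m) then (i, m + 1)
  else p.

Definition h_gen_inv (i : nat) : F := fun p => let (a, m) := p in
  if (a =? 1) && (2 <=? m) then (1, m + 1)
  else if (a =? i) && (m =? 1) then (1, 2)
  else if (a =? i) && (2 <=? m) then (i, m - 1)
  else p.

Definition h_swap (i : nat) : F := swap (1, 2) (i, 1).

Definition Hn_gens (n : nat) : list F := map h_gen (seq 2 (n - 1)) ++ map h_swap (seq 2 (n - 1)).

Definition h_gen_shift (i : nat) : nat -> Z :=
  fun j => if j =? 1 then (-1)%Z else if j =? i then 1%Z else 0%Z.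

Lemma h_gen_inv_r i : 2 <= i -> comp (h_gen i) (h_gen_inv i) = idF.
Proof. intros; extensionality p; destruct p as [a m]; unfold comp, idF, h_gen, h_gen_inv; crush. Qed.

Lemma h_gen_inv_l i : 2 <= i -> comp (h_gen_inv i) (h_gen i) = idF.
Proof. intros; extensionality p; destruct p as [a m]; unfold comp, idF, h_gen, h_gen_inv; crush. Qed.

Lemma eventual_shift_h_gen n i : 2 <= i -> eventual_shift n (h_gen i) (h_gen_shift i).
Proof. intros; exists 2; intros j m Hj Hm; unfold h_gen, h_gen_shift; crush. Qed.

Lemma eventual_shift_h_gen_inv n i :
  2 <= i -> eventual_shift n (h_gen_inv i) (fun j => (- h_gen_shift i j)%Z).
Proof. intros; exists 2; intros j m Hj Hm; unfold h_gen_inv, h_gen_shift; crush. Qed.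

Lemma Hn_h_gen n i : 2 <= i <= n -> Hn n (h_gen i).
Proof.
  intros Hi. split; [split|unfold h_gen; crush].
  - apply (bij_Xn_of_inverse n _ (h_gen_inv i)).
    + intros [a m]; unfold Xn, h_gen; crush.
    + intros p; exact (equal_f (h_gen_inv_r i ltac:(lia)) p).
    + intros p; exact (equal_f (h_gen_inv_l i ltac:(lia)) p).
    + intros [a m]; unfold Xn, h_gen; crush.
  - apply transl_at_infinity_iff. exists (h_gen_shift i). apply eventual_shift_h_gen; lia.
Qed.

Lemma Hn_h_gen_inv n i : 2 <= i <= n -> Hn n (h_gen_inv i).
Proof.
  intros Hi. split; [split|unfold h_gen_inv; crush].
  - apply (bij_Xn_of_inverse n _ (h_gen i)).
    + intros [a m]; unfold Xn, h_gen_inv; crush.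
    + intros p; exact (equal_f (h_gen_inv_l i ltac:(lia)) p).
    + intros p; exact (equal_f (h_gen_inv_r i ltac:(lia)) p).
    + intros [a m]; unfold Xn, h_gen_inv; crush.
  - apply transl_at_infinity_iff. eexists. apply eventual_shift_h_gen_inv; lia.
Qed.

Lemma fpow_h_gen_12 i k : 2 <= i -> 1 <= k -> fpow (h_gen i) k (1, 2) = (i, k).
Proof.
  intros Hi Hk. induction k as [|[|k] IH]; [lia|simpl; unfold comp, h_gen, idF; crush|].
  change (fpow (h_gen i) (S (S k)) (1, 2)) with (h_gen i (fpow (h_gen i) (S k) (1, 2))).
  rewrite IH by lia. unfold h_gen; crush.
Qed.

Lemma fpow_h_gen_i1 i k : 2 <= i -> fpow (h_gen i) k (i, 1) = (i, k + 1).
Proof.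
  intros Hi. induction k as [|k IH]; [reflexivity|].
  change (fpow (h_gen i) (S k) (i, 1)) with (h_gen i (fpow (h_gen i) k (i, 1))).
  rewrite IH. unfold h_gen; crush.
Qed.

Lemma fpow_h_gen_inv_i1 i k : 2 <= i -> 1 <= k -> fpow (h_gen_inv i) k (i, 1) = (1, k + 1).
Proof.
  intros Hi Hk. induction k as [|[|k] IH]; [lia|simpl; unfold comp, h_gen_inv, idF; crush|].
  change (fpow (h_gen_inv i) (S (S k)) (i, 1)) with (h_gen_inv i (fpow (h_gen_inv i) (S k) (i, 1))).
  rewrite IH by lia. unfold h_gen_inv; crush.
Qed.

Lemma fpow_h_gen_inv_12 i k : 2 <= i -> fpow (h_gen_inv i) k (1, 2) = (1, k + 2).
Proof.
  intros Hi. induction k as [|k IH]; [reflexivity|].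
  change (fpow (h_gen_inv i) (S k) (1, 2)) with (h_gen_inv i (fpow (h_gen_inv i) k (1, 2))).
  rewrite IH. unfold h_gen_inv; crush.
Qed.

Lemma box_ray_NoDup n N d : NoDup (box n N ++ map (fun j => (1, N + j)) (seq 1 d)).
Proof.
  apply NoDup_app.
  - apply box_NoDup.
  - apply NoDup_map_NoDup_ForallPairs; [|apply seq_NoDup]. intros x y _ _ E; inversion E; lia.
  - intros [i m] H1 H2. apply in_box in H1. apply in_map_iff in H2 as (j & E & Hj).
    apply in_seq in Hj. inversion E; lia.
Qed.

(* Counting points: a bijection that is eventually the identity on rays [2..n] cannot push ray 1
   outwards, since the box below height [M] together with [a 1] further points of ray 1 would
   all be images of the box. *)
Lemma drift_nonpos n f a : 1 <= n -> bij_Xn n f -> eventual_shift n f a ->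
  (forall i, 2 <= i <= n -> a i = 0%Z) -> (a 1%nat <= 0)%Z.
Proof.
  intros hn Bf [M HM] Ha. destruct (Z.le_gt_cases (a 1) 0) as [|Hpos]; [auto|exfalso].
  set (d := Z.to_nat (a 1)).
  set (big := box n M ++ map (fun j => (1, M + j)) (seq 1 d)).
  assert (Hbig : incl big (map f (box n M))).
  { intros y Hy.
    assert (Xy : Xn n y).
    { unfold big in Hy. apply in_app_iff in Hy as [Hy|Hy].
      - destruct y; apply in_box in Hy; unfold Xn; simpl; lia.
      - apply in_map_iff in Hy as (j & <- & Hj); apply in_seq in Hj; unfold Xn; simpl; lia. }
    destruct Bf as (_ & _ & Hs & _). destruct (Hs y Xy) as ([i m] & Xx & <-).
    apply in_map. unfold Xn in Xx; simpl in Xx.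
    destruct (le_lt_dec m M); [apply in_box; lia|exfalso].
    destruct (HM i m) as [E1 E2]; [lia|lia|].
    destruct (f (i, m)) as [i2 m2] eqn:Ef2. simpl in *. subst i2.
    unfold big in Hy. apply in_app_iff in Hy as [Hy|Hy].
    + apply in_box in Hy. destruct (Nat.eq_dec i 1); [subst; lia|]. rewrite Ha in E2 by lia. lia.
    + apply in_map_iff in Hy as (j & Ej & Hj). apply in_seq in Hj. inversion Ej; subst.
      unfold d in *; lia. }
  pose proof (NoDup_incl_length (box_ray_NoDup n M d) Hbig) as Hlen.
  unfold big in Hlen. rewrite length_app, !length_map, length_seq, box_length in Hlen. lia.
Qed.

Lemma shift_vanishing_finitary n f a : 1 <= n -> Gn n f -> eventual_shift n f a ->
  (forall i, 2 <= i <= n -> a i = 0%Z) -> exists N, forall p, N < snd p -> f p = p.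
Proof.
  intros hn [Bf _] Hsh Ha.
  destruct (bij_Xn_inverse n f Bf) as (g & Bg & _ & Hgf).
  assert (a1 : a 1%nat = 0%Z).
  { assert (Hl := drift_nonpos n f a hn Bf Hsh Ha).
    assert (Hr := drift_nonpos n g (fun i => (- a i)%Z) hn Bg
      (eventual_shift_inverse n f g a Hsh Hgf)
      ltac:(intros i Hi; cbv beta; rewrite (Ha i Hi); reflexivity)).
    cbv beta in Hr. lia. }
  clear g Bg Hgf. destruct Hsh as [M HM]. exists M. intros [i m] Hm. simpl in Hm.
  destruct (classic (Xn n (i, m))) as [Xp|Xp]; [|destruct Bf as (_&_&_&Ho); apply Ho; auto].
  unfold Xn in Xp; simpl in Xp.
  destruct (HM i m) as [E1 E2]; [lia|lia|].
  assert (a i = 0%Z) by (destruct (Nat.eq_dec i 1); [subst; auto|apply Ha; lia]).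
  destruct (f (i, m)) as [i2 m2]; simpl in *. subst. f_equal. lia.
Qed.

Section Generation.
Variable n : nat.
Hypothesis hn : 2 <= n.
Notation Gen := (generated (Hn_gens n)).

Lemma Hn_gens_Hn f : In f (Hn_gens n) -> Hn n f.
Proof.
  unfold Hn_gens; rewrite in_app_iff, !in_map_iff.
  intros [(i & <- & Hi)|(i & <- & Hi)]; apply in_seq in Hi.
  - apply Hn_h_gen; lia.
  - apply Hn_swap; unfold Xn; simpl; try lia; intros E; inversion E; lia.
Qed.

Lemma gen_h_gen i : 2 <= i <= n -> Gen (h_gen i).
Proof. intros; apply gen_in; unfold Hn_gens; apply in_app_iff; left; apply in_map, in_seq; lia. Qed.

Lemma gen_h_swap i : 2 <= i <= n -> Gen (h_swap i).
Proof. intros; apply gen_in; unfold Hn_gens; apply in_app_iff; right; apply in_map, in_seq; lia. Qed.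

Lemma gen_h_gen_inv i : 2 <= i <= n -> Gen (h_gen_inv i).
Proof.
  intros; apply (gen_inv _ (h_gen i)); [apply gen_h_gen| apply h_gen_inv_r | apply h_gen_inv_l]; lia.
Qed.

Lemma gen_fpow f k : Gen f -> Gen (fpow f k).
Proof. intros H; induction k; simpl; [apply gen_id|apply gen_comp; auto]. Qed.

(* Conjugating [h_swap i] by powers of [h_gen i] (resp. its inverse) moves it along ray [i]
   (resp. ray 1). *)
Lemma gen_swap_ray i k : 2 <= i <= n -> 1 <= k -> Gen (swap (i, k) (i, k + 1)).
Proof.
  intros Hi Hk. rewrite <- (fpow_h_gen_12 i k), <- (fpow_h_gen_i1 i k) by lia.
  rewrite <- (conj_swap _ (fpow (h_gen_inv i) k)).
  - apply gen_comp; [apply gen_fpow, gen_h_gen; auto|].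
    apply gen_comp; [apply gen_h_swap; auto|apply gen_fpow, gen_h_gen_inv; auto].
  - apply fpow_inverse, h_gen_inv_r; lia.
  - apply fpow_inverse, h_gen_inv_l; lia.
Qed.

Lemma gen_swap_ray1 k : 1 <= k -> Gen (swap (1, k + 1) (1, k + 2)).
Proof.
  intros Hk. rewrite swap_comm, <- (fpow_h_gen_inv_12 2 k), <- (fpow_h_gen_inv_i1 2 k) by lia.
  rewrite <- (conj_swap _ (fpow (h_gen 2) k)).
  - apply gen_comp; [apply gen_fpow, gen_h_gen_inv; lia|].
    apply gen_comp; [apply gen_h_swap; lia|apply gen_fpow, gen_h_gen; lia].
  - apply fpow_inverse, h_gen_inv_l; lia.
  - apply fpow_inverse, h_gen_inv_r; lia.
Qed.

Lemma gen_swap_trans x y z :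
  x <> y -> x <> z -> Gen (swap x y) -> Gen (swap y z) -> Gen (swap x z).
Proof.
  intros H1 H2 G1 G2.
  assert (E : comp (swap y z) (comp (swap x y) (swap y z)) = swap x z).
  { rewrite conj_swap by apply swap_involutive. rewrite swap_l, swap_other; auto. }
  rewrite <- E. apply gen_comp; [|apply gen_comp]; auto.
Qed.

Lemma gen_swap_12 y : Xn n y -> y <> (1, 1) -> Gen (swap (1, 2) y).
Proof.
  destruct y as [a m]. unfold Xn; simpl. intros Hy Ho.
  destruct (Nat.eq_dec a 1) as [->|Ha]; induction m as [|m IH]; try lia.
  - assert (Hm : 1 <= m) by (destruct m; [congruence|lia]).
    destruct (Nat.eq_dec m 1) as [->|Hm1]; [rewrite swap_diag; apply gen_id|].
    destruct (Nat.eq_dec m 2) as [->|Hm2]; [apply (gen_swap_ray1 1); lia|].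
    apply (gen_swap_trans _ (1, m)); try (intros E; inversion E; lia).
    + apply IH; try lia; intros E; inversion E; lia.
    + replace (1, m) with (1, (m - 1) + 1) by (f_equal; lia).
      replace (1, S m) with (1, (m - 1) + 2) by (f_equal; lia).
      apply gen_swap_ray1; lia.
  - destruct m as [|m]; [apply gen_h_swap; lia|].
    apply (gen_swap_trans _ (a, S m)); try (intros E; inversion E; lia).
    + apply IH; try lia; intros E; inversion E; lia.
    + replace (a, S (S m)) with (a, S m + 1) by (f_equal; lia). apply gen_swap_ray; lia.
Qed.

Lemma gen_swap x y : Xn n x -> Xn n y -> x <> (1, 1) -> y <> (1, 1) -> Gen (swap x y).
Proof.
  intros Xx Xy Hx Hy.
  destruct (point_eqb_spec x (1, 2)) as [->|H1]; [apply gen_swap_12; auto|].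
  destruct (point_eqb_spec y (1, 2)) as [->|H2]; [rewrite swap_comm; apply gen_swap_12; auto|].
  destruct (point_eqb_spec x y) as [->|H3]; [rewrite swap_diag; apply gen_id|].
  apply (gen_swap_trans _ (1, 2)); auto; [rewrite swap_comm|]; apply gen_swap_12; auto.
Qed.

(* Each point of the support list is fixed in turn by composing with a transposition. *)
Lemma gen_of_support (L : list (nat * nat)) :
  forall f, Hn n f -> (forall x, ~ In x L -> f x = x) -> Gen f.
Proof.
  induction L as [|p L IH]; intros f Hf Hfix.
  - replace f with idF; [apply gen_id|]. extensionality x. symmetry; apply Hfix; auto.
  - destruct (point_eqb_spec (f p) p) as [Ep|Ep].
    { apply IH; auto. intros x Hx. destruct (point_eqb_spec x p) as [->|Hxp]; auto.
      apply Hfix. intros [E|E]; [congruence|contradiction]. }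
    pose proof Hf as [[Bf _] Ho]. pose proof Bf as (Hm & _ & _ & Hout).
    set (q := f p).
    assert (Xp : Xn n p) by (apply NNPP; intros Xp; apply Ep, Hout, Xp).
    assert (Xq : Xn n q) by (apply Hm; auto).
    assert (po : p <> (1, 1)) by (intros ->; auto).
    assert (qo : q <> (1, 1)) by (apply (Hn_moves_off_base n); auto).
    assert (Hfix' : forall x, f x = x -> comp (swap p q) f x = x).
    { intros x Ex. unfold comp. rewrite Ex. apply swap_other; [intros ->; auto|].
      intros Exq. apply Ep. apply (bij_Xn_injective n f); auto. unfold q in Exq; congruence. }
    replace f with (comp (swap p q) (comp (swap p q) f))
      by (change (comp (comp (swap p q) (swap p q)) f = f); rewrite swap_involutive; reflexivity).
    apply gen_comp; [apply gen_swap; auto|].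
    apply IH; [apply Hn_comp; auto; apply Hn_swap; auto|].
    intros x Hx. destruct (point_eqb_spec x p) as [->|Hxp].
    + unfold comp. fold q. apply swap_r.
    + apply Hfix', Hfix. intros [E|E]; [congruence|contradiction].
Qed.

Lemma gen_finitary f N : Hn n f -> (forall p, N < snd p -> f p = p) -> Gen f.
Proof.
  intros Hf HN. apply (gen_of_support (box n N)); auto.
  intros [i m] Hx. destruct (classic (Xn n (i, m))) as [Xx|Xx].
  - apply HN. simpl. destruct (le_lt_dec m N); auto.
    exfalso; apply Hx, in_box. unfold Xn in Xx; simpl in Xx; lia.
  - destruct Hf as [[(_ & _ & _ & Ho) _] _]. auto.
Qed.

Lemma cancel_ray_shift (z : Z) r : 2 <= r <= n -> exists P Q,
  Gen P /\ Gen Q /\ Hn n P /\ comp Q P = idF /\ eventual_shift n P (fun j => (- z * h_gen_shift r j)%Z).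
Proof.
  intros Hr. destruct (Z_le_gt_dec 0 z).
  - exists (fpow (h_gen_inv r) (Z.to_nat z)), (fpow (h_gen r) (Z.to_nat z)).
    split; [|split; [|split; [|split]]].
    + apply gen_fpow, gen_h_gen_inv; auto.
    + apply gen_fpow, gen_h_gen; auto.
    + apply Hn_fpow, Hn_h_gen_inv; auto.
    + apply fpow_inverse, h_gen_inv_r; lia.
    + eapply eventual_shift_ext; [|apply eventual_shift_fpow, eventual_shift_h_gen_inv; lia].
      intros; cbv beta. rewrite Z2Nat.id; lia.
  - exists (fpow (h_gen r) (Z.to_nat (- z))), (fpow (h_gen_inv r) (Z.to_nat (- z))).
    split; [|split; [|split; [|split]]].
    + apply gen_fpow, gen_h_gen; auto.
    + apply gen_fpow, gen_h_gen_inv; auto.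
    + apply Hn_fpow, Hn_h_gen; auto.
    + apply fpow_inverse, h_gen_inv_l; lia.
    + eapply eventual_shift_ext; [|apply eventual_shift_fpow, eventual_shift_h_gen; lia].
      intros; cbv beta. rewrite Z2Nat.id; lia.
Qed.

(* The shifts on the rays in [R] are cancelled one ray at a time. *)
Lemma gen_of_shift_support R : forall f a, Hn n f -> eventual_shift n f a ->
  (forall i, 2 <= i <= n -> ~ In i R -> a i = 0%Z) -> Gen f.
Proof.
  induction R as [|r R IH]; intros f a Hf Ef Ha.
  - destruct (shift_vanishing_finitary n f a ltac:(lia) (proj1 Hf) Ef) as [N HN].
    + intros i Hi; apply Ha; auto.
    + apply (gen_finitary f N); auto.
  - destruct (classic (2 <= r <= n)) as [Hr|Hr].
    2:{ apply (IH f a); auto. intros i Hi HiR. apply Ha; auto. intros [E|E]; [subst; lia|contradiction]. }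
    destruct (cancel_ray_shift (a r) r Hr) as (P & Q & GP & GQ & HP & EQP & EP).
    replace f with (comp Q (comp P f)) by (change (comp (comp Q P) f = f); rewrite EQP; reflexivity).
    apply gen_comp; auto.
    apply (IH _ _ (Hn_comp _ _ _ HP Hf) (eventual_shift_comp _ _ _ _ _ EP Ef)).
    intros i Hi HiR. cbv beta. unfold h_gen_shift.
    destruct (Nat.eq_dec i r) as [->|Hir].
    + rewrite (proj2 (Nat.eqb_neq r 1)), Nat.eqb_refl by lia. ring.
    + rewrite (proj2 (Nat.eqb_neq i 1)), (proj2 (Nat.eqb_neq i r)) by lia.
      rewrite (Ha i Hi) by (intros [E|E]; [lia|contradiction]). ring.
Qed.

Theorem Hn_fin_gen : fin_gen (Hn n).
Proof.
  exists (Hn_gens n). split; [apply Hn_gens_Hn|].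
  intros f Hf. pose proof Hf as [[_ Tf] _]. apply transl_at_infinity_iff in Tf as [a Ea].
  apply (gen_of_shift_support (seq 2 (n - 1)) f a); auto.
  intros i Hi HiR. exfalso; apply HiR, in_seq; lia.
Qed.

End Generation.

(** * The stabiliser is isomorphic to the whole group *)

(* Removing the base point [(1,1)] and sliding ray 1 down by one identifies [X_n] minus the
   base point with [X_n]; [collapse] transports a permutation along this identification. *)
Definition ray1_down : F := fun p => let (a, m) := p in
  if (a =? 1) && (2 <=? m) then (1, m - 1) else p.

Definition ray1_up : F := fun p => let (a, m) := p in
  if (a =? 1) && (1 <=? m) then (1, m + 1) else p.

Definition collapse (f : F) : F := comp ray1_down (comp f ray1_up).

Definition expand (g : F) : F := fun q =>
  if point_eqb q (1, 1) then (1, 1) else ray1_up (g (ray1_down q)).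

Lemma ray1_down_up q : ray1_down (ray1_up q) = q.
Proof. destruct q as [a m]; unfold ray1_down, ray1_up; crush. Qed.

Lemma ray1_up_down q : q <> (1, 1) -> ray1_up (ray1_down q) = q.
Proof. destruct q as [a m]; unfold ray1_down, ray1_up; crush. Qed.

Lemma ray1_up_off_base q : ray1_up q <> (1, 1).
Proof. destruct q as [a m]; unfold ray1_up; crush. Qed.

Section Collapse.
Variable n : nat.
Hypothesis hn : 1 <= n.

Lemma Xn_ray1_up q : Xn n q -> Xn n (ray1_up q).
Proof. destruct q as [a m]; unfold Xn, ray1_up; crush. Qed.

Lemma Xn_ray1_down q : Xn n q -> Xn n (ray1_down q).
Proof. destruct q as [a m]; unfold Xn, ray1_down; crush. Qed.

Lemma ray1_up_out q : ~ Xn n q -> ray1_up q = q.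
Proof. destruct q as [a m]; unfold Xn, ray1_up; crush. Qed.

Lemma ray1_down_out q : ~ Xn n q -> ray1_down q = q.
Proof. destruct q as [a m]; unfold Xn, ray1_down; crush. Qed.

Lemma collapse_comp f g : Hn n g -> collapse (comp f g) = comp (collapse f) (collapse g).
Proof.
  intros Hg. extensionality q. unfold collapse, comp.
  rewrite ray1_up_down; auto. apply (Hn_moves_off_base n); auto. apply ray1_up_off_base.
Qed.

Lemma collapse_id : collapse idF = idF.
Proof. extensionality q. unfold collapse, comp, idF. apply ray1_down_up. Qed.

Lemma Gn_collapse f : Hn n f -> Gn n (collapse f).
Proof.
  intros Hf. destruct (Hn_inv n f Hf) as (g & Hg & E1 & E2).
  pose proof Hf as [[Bf Tf] Ho]. split.
  - apply (bij_Xn_of_inverse n _ (collapse g)).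
    + intros q Xq. unfold collapse, comp. apply Xn_ray1_down, Bf, Xn_ray1_up; auto.
    + intros q. assert (E := collapse_comp f g Hg). rewrite E1, collapse_id in E.
      exact (eq_sym (equal_f E q)).
    + intros q. assert (E := collapse_comp g f Hf). rewrite E2, collapse_id in E.
      exact (eq_sym (equal_f E q)).
    + intros q Xq. unfold collapse, comp. destruct Bf as (_&_&_&Bo).
      rewrite ray1_up_out, Bo, ray1_down_out; auto.
  - apply transl_at_infinity_iff in Tf as [a [M HM]]. apply transl_at_infinity_iff. exists a.
    destruct (shift_bound n a) as [B HB]. exists (M + B + 2). intros i m Hi Hm.
    specialize (HB i Hi). unfold collapse, comp.
    destruct (Nat.eq_dec i 1) as [->|Hi1].
    + replace (ray1_up (1, m)) with (1, m + 1) by (unfold ray1_up; crush).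
      destruct (HM 1 (m + 1)) as [E3 E4]; [lia|lia|].
      destruct (f (1, m + 1)) as [i' m']; cbn [fst snd] in *; subst. unfold ray1_down; crush.
    + replace (ray1_up (i, m)) with (i, m) by (unfold ray1_up; crush).
      destruct (HM i m) as [E3 E4]; [lia|lia|].
      destruct (f (i, m)) as [i' m']; cbn [fst snd] in *; subst. unfold ray1_down; crush.
Qed.

Lemma collapse_inj f g : Hn n f -> Hn n g -> collapse f = collapse g -> f = g.
Proof.
  intros Hf Hg E. extensionality p.
  destruct (point_eqb_spec p (1, 1)) as [->|Hp]; [rewrite (proj2 Hf), (proj2 Hg); auto|].
  rewrite <- (ray1_up_down p Hp).
  assert (E' := equal_f E (ray1_down p)). unfold collapse, comp in E'.
  rewrite <- (ray1_up_down (f _)), <- (ray1_up_down (g _)), E'; auto;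
    apply (Hn_moves_off_base n); auto; apply ray1_up_off_base.
Qed.

Lemma expand_base g : expand g (1, 1) = (1, 1).
Proof. unfold expand. destruct (point_eqb_spec (1,1) (1,1)); congruence. Qed.

Lemma expand_off_base g q : q <> (1, 1) -> expand g q = ray1_up (g (ray1_down q)).
Proof. intros H; unfold expand. destruct (point_eqb_spec q (1,1)); congruence. Qed.

Lemma expand_inverse g h : comp g h = idF -> comp (expand g) (expand h) = idF.
Proof.
  intros E. extensionality q. unfold comp, idF.
  destruct (point_eqb_spec q (1, 1)) as [->|Hq]; [rewrite !expand_base; auto|].
  rewrite (expand_off_base h q Hq), expand_off_base, ray1_down_up by apply ray1_up_off_base.
  assert (E' := equal_f E (ray1_down q)). unfold comp, idF in E'. rewrite E'.
  apply ray1_up_down; auto.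
Qed.

Lemma collapse_surj g : Gn n g -> exists f, Hn n f /\ collapse f = g.
Proof.
  intros Gg. destruct (Gn_inv n g Gg) as (h & Gh & E1 & E2).
  pose proof Gg as [Bg Tg]. exists (expand g). split; [split; [split|]|].
  - apply (bij_Xn_of_inverse n _ (expand h)).
    + intros q Xq. destruct (point_eqb_spec q (1, 1)) as [->|Hq]; [rewrite expand_base; auto|].
      rewrite expand_off_base by auto. apply Xn_ray1_up, Bg, Xn_ray1_down; auto.
    + intros q; exact (equal_f (expand_inverse g h E1) q).
    + intros q; exact (equal_f (expand_inverse h g E2) q).
    + intros q Xq. rewrite expand_off_base by (intros ->; apply Xq; unfold Xn; simpl; lia).
      destruct Bg as (_&_&_&Bo). rewrite ray1_down_out, Bo, ray1_up_out; auto.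
  - apply transl_at_infinity_iff in Tg as [a [M HM]]. apply transl_at_infinity_iff. exists a.
    destruct (shift_bound n a) as [B HB]. exists (M + B + 2). intros i m Hi Hm.
    specialize (HB i Hi). rewrite expand_off_base by (intros E; inversion E; lia).
    destruct (Nat.eq_dec i 1) as [->|Hi1].
    + replace (ray1_down (1, m)) with (1, m - 1) by (unfold ray1_down; crush).
      destruct (HM 1 (m - 1)) as [E3 E4]; [lia|lia|].
      destruct (g (1, m - 1)) as [i' m']; cbn [fst snd] in *; subst. unfold ray1_up; crush.
    + replace (ray1_down (i, m)) with (i, m) by (unfold ray1_down; crush).
      destruct (HM i m) as [E3 E4]; [lia|lia|].
      destruct (g (i, m)) as [i' m']; cbn [fst snd] in *; subst. unfold ray1_up; crush.
  - apply expand_base.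
  - extensionality q. unfold collapse, comp.
    rewrite expand_off_base by apply ray1_up_off_base. rewrite !ray1_down_up. auto.
Qed.

Theorem Hn_iso_Gn : group_iso (Hn n) (Gn n).
Proof.
  exists collapse. split; [|split; [|split]].
  - apply Gn_collapse.
  - intros f g Hf Hg. apply collapse_comp; auto.
  - apply collapse_inj.
  - apply collapse_surj.
Qed.

End Collapse.

(** * Cosets of the stabiliser *)

Section Cosets.
Variable n : nat.
Hypothesis hn : 2 <= n.

Lemma Xn_base : Xn n (1, 1).
Proof. unfold Xn; simpl; lia. Qed.

Theorem Gn_double_cosets f : Gn n f ->
  Hn n f \/ exists h1 h2, Hn n h1 /\ Hn n h2 /\ f = comp h1 (comp (gen_g 1) h2).
Proof.
  intros Gf. destruct (point_eqb_spec (f (1, 1)) (1, 1)) as [E|E]; [left; split; auto|right].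
  pose proof Gf as [(Hm & _ & Hs & _) _].
  destruct (Hs (1, 1) Xn_base) as (x & Xx & Ex).
  assert (xo : x <> (1, 1)) by (intros ->; contradiction).
  destruct (Gn_inv n _ (Gn_gen_g n 1 ltac:(lia) ltac:(lia))) as (gv & Gv & E1 & E2).
  assert (gvo : gv (1, 1) = (1, 2)).
  { assert (H := equal_f E2 (1, 2)). unfold comp, idF in H. rewrite <- H. reflexivity. }
  assert (Hx : Hn n (swap (1, 2) x)).
  { apply Hn_swap; auto; [unfold Xn; simpl; lia|intros Ee; inversion Ee]. }
  exists (comp f (comp (swap (1, 2) x) gv)), (swap (1, 2) x). split; [split|split; [auto|]].
  - apply Gn_comp; auto. apply Gn_comp; auto. apply Hx.
  - unfold comp. rewrite gvo, swap_l. auto.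
  - change (f = comp f (comp (swap (1, 2) x) (comp (comp gv (gen_g 1)) (swap (1, 2) x)))).
    rewrite E2. change (f = comp f (comp (swap (1, 2) x) (swap (1, 2) x))).
    rewrite swap_involutive. reflexivity.
Qed.

(* The coset [H_n g] consists of the [f] sending the point [g^-1 (1,1)] to the base point, so
   cosets correspond to points of [X_n]. *)
Definition coset_at (p : nat * nat) : F -> Prop := fun f => Gn n f /\ f p = (1, 1).

Lemma coset_eq_coset_at g x : Gn n g -> g x = (1, 1) -> coset n g = coset_at x.
Proof.
  intros Gg Ex. extensionality f. apply propositional_extensionality. split.
  - intros (h & [Gh Ho] & ->). split; [apply Gn_comp; auto|]. unfold comp; rewrite Ex; auto.
  - intros [Gf Ef]. destruct (Gn_inv n g Gg) as (gv & Gv & E1 & E2).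
    exists (comp f gv). split; [split|].
    + apply Gn_comp; auto.
    + unfold comp. rewrite <- Ex. assert (H := equal_f E2 x). unfold comp, idF in H.
      rewrite H; congruence.
    + change (f = comp f (comp gv g)). rewrite E2. reflexivity.
Qed.

Lemma coset_swap_base p : Xn n p -> coset n (swap p (1, 1)) = coset_at p.
Proof. intros Xp. apply coset_eq_coset_at; [apply Gn_swap; auto; apply Xn_base|apply swap_l]. Qed.

Lemma is_coset_iff C : is_coset n C <-> exists p, Xn n p /\ C = coset_at p.
Proof.
  split.
  - intros (g & Gg & ->). pose proof Gg as [(_ & _ & Hs & _) _].
    destruct (Hs (1, 1) Xn_base) as (x & Xx & Ex).
    exists x; split; auto. apply coset_eq_coset_at; auto.
  - intros (p & Xp & ->). exists (swap p (1, 1)).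
    split; [apply Gn_swap; auto; apply Xn_base|]. symmetry; apply coset_swap_base; auto.
Qed.

Lemma coset_at_inj p q : Xn n p -> coset_at p = coset_at q -> p = q.
Proof.
  intros Xp E.
  assert (H : coset_at p (swap p (1, 1))) by (split; [apply Gn_swap; auto; apply Xn_base|apply swap_l]).
  rewrite E in H. destruct H as [_ H].
  destruct (point_eqb_spec q p) as [->|H1]; auto.
  destruct (point_eqb_spec q (1, 1)) as [->|H2].
  - rewrite swap_r in H. auto.
  - rewrite swap_other in H; auto. contradiction.
Qed.

Lemma coset_id : coset n idF = coset_at (1, 1).
Proof. apply coset_eq_coset_at; [apply Gn_id|reflexivity]. Qed.

Definition point_adj (p q : nat * nat) : Prop :=
  Xn n p /\ Xn n q /\ exists s, In s (Sgen n) /\ (s q = p \/ s p = q).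

Lemma point_adj_sym p q : point_adj p q -> point_adj q p.
Proof. intros (Xp & Xq & s & Hs & H). split; [auto|split; [auto|]]. exists s; split; auto; tauto. Qed.

Lemma schreier_sym C D : schreier n C D -> schreier n D C.
Proof. intros (g & s & Gg & Hs & H). exists g, s; split; [auto|split; [auto|]]. tauto. Qed.

Lemma schreier_step p q s : Xn n p -> In s (Sgen n) -> s q = p ->
  schreier n (coset_at p) (coset_at q).
Proof.
  intros Xp Hs Esq.
  assert (Gp : Gn n (swap p (1, 1))) by (apply Gn_swap; auto; apply Xn_base).
  exists (swap p (1, 1)), s. split; [auto|split; [auto|left]]. split.
  - symmetry; apply coset_swap_base; auto.
  - symmetry; apply coset_eq_coset_at; [apply Gn_comp; auto; apply Sgen_Gn; auto|].
    unfold comp; rewrite Esq; apply swap_l.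
Qed.

Lemma schreier_iff C D :
  schreier n C D <-> exists p q, C = coset_at p /\ D = coset_at q /\ point_adj p q.
Proof.
  split.
  - intros (g & s & Gg & Hs & HCD).
    pose proof (Sgen_Gn n s Hs) as Gs.
    pose proof Gg as [(_ & _ & Hsg & _) _]. destruct (Hsg (1, 1) Xn_base) as (x & Xx & Ex).
    pose proof Gs as [(_ & _ & Hss & _) _]. destruct (Hss x Xx) as (y & Xy & Ey).
    assert (E1 : coset n g = coset_at x) by (apply coset_eq_coset_at; auto).
    assert (E2 : coset n (comp g s) = coset_at y).
    { apply coset_eq_coset_at; [apply Gn_comp; auto|unfold comp; rewrite Ey; auto]. }
    destruct HCD as [[-> ->]|[-> ->]]; [exists x, y|exists y, x];
      (split; [auto|split; [auto|split; [auto|split; [auto|exists s; split; auto]]]]).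
  - intros (p & q & -> & -> & Xp & Xq & s & Hs & [Esq|Esp]).
    + apply (schreier_step p q s); auto.
    + apply schreier_sym, (schreier_step q p s); auto.
Qed.

Lemma schreier_coset_at p q : point_adj p q -> schreier n (coset_at p) (coset_at q).
Proof. intros H. apply schreier_iff. exists p, q; auto. Qed.

Lemma schreier_points C D : schreier n C D ->
  exists a b, Xn n a /\ Xn n b /\ C = coset_at a /\ D = coset_at b /\ point_adj a b.
Proof.
  intros H. apply schreier_iff in H as (a & b & -> & -> & Hab).
  exists a, b. pose proof Hab as (Xa & Xb & _). auto 6.
Qed.

Lemma schreier_walk_points x y k p : dist_le (schreier n) x y k -> Xn n p -> x = coset_at p ->
  exists q, Xn n q /\ y = coset_at q /\ dist_le point_adj p q k.
Proof.
  intros H Xp E. apply (dist_le_pullback coset_at (schreier n) point_adj (Xn n)) with (x := x); auto.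
  - intros C D HCD. destruct (schreier_points C D HCD) as (a & b & ? & ? & ? & ? & ?).
    exists a, b; auto.
  - intros a b Xa _ Eab. apply coset_at_inj; auto.
Qed.

Lemma point_walk_schreier p q k :
  dist_le point_adj p q k -> dist_le (schreier n) (coset_at p) (coset_at q) k.
Proof. apply dist_le_map. apply schreier_coset_at. Qed.

End Cosets.

(** * Geometry of the Schreier graph *)

Section SchreierGeometry.
Variable n : nat.
Hypothesis hn : 2 <= n.

Local Notation coset_at := (coset_at n).
Local Notation point_adj := (point_adj n).

Definition Xnb (p : nat * nat) : bool := (1 <=? fst p) && (fst p <=? n) && (1 <=? snd p).

(* The points of [X_n] form a tree: ray 1 is a path from the base point [(1,1)], and each other
   ray hangs off the base point. Points outside [X_n] are attached to the base point as leaves. *)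
Definition tree_parent (p : nat * nat) : nat * nat :=
  if Xnb p then
    (if fst p =? 1 then (1, snd p - 1) else if snd p =? 1 then (1, 1) else (fst p, snd p - 1))
  else (1, 1).

Definition tree_depth (p : nat * nat) : nat :=
  if Xnb p then (if fst p =? 1 then snd p - 1 else snd p) else 1.

Definition tree_edge := parent_edge (nat * nat) (1, 1) tree_parent.

Lemma tree_depth_parent p : p <> (1, 1) -> tree_depth (tree_parent p) + 1 = tree_depth p.
Proof. destruct p as [a m]; unfold tree_depth, tree_parent, Xnb; crush. Qed.

Lemma tree_edge_is_tree : is_tree tree_edge.
Proof. apply parent_edge_is_tree with (depth := tree_depth). apply tree_depth_parent. Qed.

Lemma tree_parent_out z : ~ Xn n z -> tree_parent z = (1, 1).
Proof.
  intros Xz. unfold tree_parent. replace (Xnb z) with false; auto.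
  destruct z as [a m]; unfold Xn in Xz; unfold Xnb; cbn [fst snd] in *.
  symmetry. apply not_true_iff_false. intros H. apply Xz.
  rewrite !andb_true_iff, !Nat.leb_le in H. lia.
Qed.

Lemma Xn_tree_parent z : z <> (1, 1) -> Xn n (tree_parent z).
Proof.
  intros Hz. destruct (classic (Xn n z)) as [Xz|Xz].
  - destruct z as [a m]; revert Xz Hz; unfold Xn, tree_parent, Xnb; crush.
  - rewrite tree_parent_out by auto. apply (Xn_base n hn).
Qed.

Lemma point_adj_parent p : Xn n p -> p <> (1, 1) -> point_adj p (tree_parent p).
Proof.
  intros Xp Hp. split; [auto|split; [apply Xn_tree_parent; auto|]].
  destruct p as [a m]. unfold Xn in Xp; simpl in Xp.
  destruct (Nat.eq_dec a 1) as [->|Ha].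
  - exists (gen_g 1). split; [apply gen_g_in_Sgen; lia|right]. unfold gen_g, tree_parent, Xnb; crush.
  - exists (gen_g (a - 1)). split; [apply gen_g_in_Sgen; lia|left]. unfold gen_g, tree_parent, Xnb; crush.
Qed.

Lemma point_adj_of_tree_edge p q : Xn n p -> Xn n q -> tree_edge p q -> point_adj p q.
Proof.
  intros Xp Xq [[Hp ->]|[Hq ->]].
  - apply point_adj_parent; auto.
  - apply point_adj_sym, point_adj_parent; auto.
Qed.

Lemma Sgen_step_tree_edge s x : In s (Sgen n) -> Xn n x -> s x = x \/ tree_edge x (s x).
Proof.
  intros Hs Xx. destruct x as [a m]. unfold Xn in Xx; simpl in Xx.
  assert (child : forall p q, p <> (1, 1) -> q = tree_parent p -> tree_edge p q) by (left; auto).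
  destruct (Sgen_cases n s Hs) as [(i & Hi1 & Hi2 & ->)| ->].
  - unfold gen_g.
    destruct (Nat.eqb_spec a 1) as [->|Ha]; [destruct (Nat.ltb_spec 1 m)|]; cbn [andb].
    + right; apply child; [intros E; inversion E; lia|unfold tree_parent, Xnb; crush].
    + assert (m = 1) as -> by lia. right. apply parent_edge_sym.
      apply child; [intros E; inversion E; lia|unfold tree_parent, Xnb; crush].
    + destruct (Nat.eqb_spec a (i + 1)) as [->|Ha2]; cbn [andb]; [|left; auto].
      destruct (Nat.leb_spec 1 m); [|lia]. right. apply parent_edge_sym.
      apply child; [intros E; inversion E; lia|unfold tree_parent, Xnb; crush].
  - unfold beta. simpl fst; simpl snd.
    destruct (Nat.eqb_spec a 1) as [->|Ha]; destruct (Nat.eqb_spec m 1) as [->|Hm]; cbn [andb].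
    + right. apply parent_edge_sym. apply child; [intros E; inversion E; lia|unfold tree_parent, Xnb; crush].
    + left; auto.
    + destruct (Nat.eqb_spec a 2) as [->|Ha2]; cbn [andb]; [|left; auto].
      right. apply child; [intros E; inversion E; lia|unfold tree_parent, Xnb; crush].
    + destruct (Nat.eqb_spec a 2); left; auto.
Qed.

Lemma point_adj_tree_edge p q : point_adj p q -> p = q \/ tree_edge p q.
Proof.
  intros (Xp & Xq & s & Hs & [E|E]).
  - destruct (Sgen_step_tree_edge s q Hs Xq) as [E'|E']; [left; congruence|].
    right; apply parent_edge_sym; rewrite <- E; auto.
  - destruct (Sgen_step_tree_edge s p Hs Xp) as [E'|E']; [left; congruence|right; rewrite <- E; auto].
Qed.

(* A tree walk that leaves [X_n] does so through the base point, so it can be shortcut there. *)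
Lemma tree_walk_point_walk p q k : dist_le tree_edge p q k -> Xn n q ->
  (Xn n p -> dist_le point_adj p q k) /\ (~ Xn n p -> dist_le point_adj (1, 1) q k).
Proof.
  intros H; induction H as [p k|p z q k Hpz H IH]; intros Xq.
  - split; [constructor|intros; contradiction].
  - destruct (IH Xq) as [IH1 IH2]. split.
    + intros Xp. destruct (classic (Xn n z)) as [Xz|Xz].
      * apply dl_step with z; [apply point_adj_of_tree_edge; auto|auto].
      * destruct Hpz as [[Hp Ez]|[Hz Ep']].
        -- exfalso; apply Xz; rewrite Ez; apply Xn_tree_parent; auto.
        -- rewrite tree_parent_out in Ep' by auto. subst p. eapply dist_le_mono; [apply IH2; auto|lia].
    + intros Xp. destruct Hpz as [[Hp Ez]|[Hz Ep']].
      * rewrite tree_parent_out in Ez by auto. subst z.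
        eapply dist_le_mono; [apply IH1, (Xn_base n hn)|lia].
      * exfalso; apply Xp; rewrite Ep'; apply Xn_tree_parent; auto.
Qed.

Definition point_of (C : F -> Prop) : nat * nat :=
  epsilon (inhabits (1, 1)) (fun p => Xn n p /\ C = coset_at p).

Lemma point_of_coset_at p : Xn n p -> point_of (coset_at p) = p.
Proof.
  intros Xp. unfold point_of.
  destruct (epsilon_spec (inhabits (1, 1)) (fun q => Xn n q /\ coset_at p = coset_at q)
    (ex_intro _ p (conj Xp eq_refl))) as [_ E].
  symmetry; apply (coset_at_inj n hn); auto.
Qed.

Theorem schreier_quasi_tree : quasi_tree (is_coset n) (schreier n).
Proof.
  exists (nat * nat)%type, tree_edge. split; [apply tree_edge_is_tree|].
  exists point_of, 1, 1. split; [auto|split; [|split]].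
  - intros x y k Px Py H. apply (is_coset_iff n hn) in Px as (p & Xp & ->).
    destruct (schreier_walk_points n hn _ _ _ p H Xp eq_refl) as (q & Xq & -> & Hw).
    rewrite !point_of_coset_at by auto. apply dist_le_mono with k; [|lia].
    apply (dist_le_drop_loops point_adj); auto. apply point_adj_tree_edge.
  - intros x y k Px Py H. apply (is_coset_iff n hn) in Px as (p & Xp & ->).
    apply (is_coset_iff n hn) in Py as (q & Xq & ->).
    rewrite !point_of_coset_at in H by auto. apply dist_le_mono with k; [|lia].
    apply (point_walk_schreier n hn). apply (tree_walk_point_walk p q k H Xq); auto.
  - intros z _. destruct (classic (Xn n z)) as [Xz|Xz].
    + exists (coset_at z); split; [apply (is_coset_iff n hn); eauto|].
      rewrite point_of_coset_at by auto. constructor.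
    + exists (coset_at (1, 1)); split; [apply (is_coset_iff n hn); exists (1, 1); split; auto; apply (Xn_base n hn)|].
      rewrite point_of_coset_at by apply (Xn_base n hn). apply dl_step with (1, 1); [|constructor].
      left. split; [intros ->; apply Xz, (Xn_base n hn)|symmetry; apply tree_parent_out; auto].
Qed.

Lemma point_adj_ray r m : 1 <= r <= n -> 1 <= m -> point_adj (r, m) (r, S m).
Proof.
  intros Hr Hm. apply point_adj_sym.
  replace (r, m) with (tree_parent (r, S m)) by (unfold tree_parent, Xnb; crush).
  apply point_adj_parent; [unfold Xn; simpl; lia|intros E; inversion E; lia].
Qed.

Lemma ray_walk_avoiding K r m j : 1 <= r <= n -> 1 <= m ->
  (forall i, i <= j -> ~ In (coset_at (r, m + i)) K) ->
  dist_le (avoidE (schreier n) K) (coset_at (r, m)) (coset_at (r, m + j)) j.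
Proof.
  intros Hr Hm. induction j as [|j IH]; intros H.
  - rewrite Nat.add_0_r; constructor.
  - apply dist_le_snoc with (coset_at (r, m + j)); [apply IH; intros; apply H; lia|].
    replace (m + S j) with (S (m + j)) in * by lia.
    split; [apply (schreier_coset_at n hn), point_adj_ray; lia|].
    split; [|replace (S (m + j)) with (m + S j) by lia]; apply H; lia.
Qed.

Lemma ray_walk r m j : 1 <= r <= n -> 1 <= m ->
  dist_le (schreier n) (coset_at (r, m)) (coset_at (r, m + j)) j.
Proof.
  intros Hr Hm. apply (dist_le_weaken (avoidE (schreier n) [])); [intros C D []; auto|].
  apply ray_walk_avoiding; auto.
Qed.

Lemma avoidE_sym K C D : avoidE (schreier n) K C D -> avoidE (schreier n) K D C.
Proof. intros (H1 & H2 & H3). split; [apply (schreier_sym n); auto|tauto]. Qed.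

Definition ray_start (r : nat) : nat * nat := if r =? 1 then (1, 2) else (r, 1).

Lemma Xn_ray_start r : 1 <= r <= n -> Xn n (ray_start r).
Proof. intros; unfold ray_start, Xn; destruct (Nat.eqb_spec r 1); simpl; lia. Qed.

Lemma ray_start_eq r : ray_start r = (r, snd (ray_start r)).
Proof. unfold ray_start; destruct (Nat.eqb_spec r 1); subst; auto. Qed.

Lemma ray_above_base r m : 1 <= r <= n -> snd (ray_start r) <= m -> ~ In (coset_at (r, m)) [coset_at (1, 1)].
Proof.
  intros Hr Hm [E|[]]. apply (coset_at_inj n hn) in E; [|apply (Xn_base n hn)].
  inversion E; subst. unfold ray_start in Hm. simpl in Hm. lia.
Qed.

Lemma ray_component_infinite r : 1 <= r <= n ->
  in_infinite_comp (is_coset n) (schreier n) [coset_at (1, 1)] (coset_at (ray_start r)).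
Proof.
  intros Hr. split; [apply (is_coset_iff n hn); exists (ray_start r); split; auto; apply Xn_ray_start; auto|].
  split; [rewrite ray_start_eq; apply ray_above_base; auto|].
  intros (l & Hl).
  set (ray := map (fun j => coset_at (r, snd (ray_start r) + j)) (seq 0 (S (length l)))).
  assert (Hnd : NoDup ray).
  { apply NoDup_map_NoDup_ForallPairs; [|apply seq_NoDup]. intros a b _ _ E.
    apply (coset_at_inj n hn) in E; [inversion E; lia|].
    unfold Xn; simpl. unfold ray_start in *; destruct (Nat.eqb_spec r 1); simpl; lia. }
  assert (Hinc : incl ray l).
  { intros y Hy. apply in_map_iff in Hy as (j & <- & _). apply Hl. split.
    - rewrite ray_start_eq. apply ray_above_base; auto.
    - exists j. rewrite ray_start_eq at 1. apply ray_walk_avoiding;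
        [lia|unfold ray_start; destruct (Nat.eqb_spec r 1); simpl; lia|intros i _; apply ray_above_base; lia]. }
  pose proof (NoDup_incl_length Hnd Hinc) as Hlen. unfold ray in Hlen.
  rewrite length_map, length_seq in Hlen. lia.
Qed.

Lemma fst_tree_parent a : Xn n a -> tree_parent a <> (1, 1) -> fst (tree_parent a) = fst a.
Proof. destruct a as [x m]; unfold Xn, tree_parent, Xnb; crush. Qed.

Lemma walk_off_base_same_ray p q k :
  dist_le (fun a b => point_adj a b /\ a <> (1, 1) /\ b <> (1, 1)) p q k -> fst q = fst p.
Proof.
  induction 1 as [|x z y k (Hxz & Hx & Hz) H IH]; auto. rewrite IH.
  destruct Hxz as (Xx & Xz & Hs).
  destruct (point_adj_tree_edge x z (conj Xx (conj Xz Hs))) as [->|[[_ E]|[_ E]]]; auto; rewrite E.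
  - apply fst_tree_parent; congruence.
  - symmetry. apply fst_tree_parent; congruence.
Qed.

Lemma rays_separated r r' : 1 <= r <= n -> 1 <= r' <= n -> r <> r' ->
  ~ comp_of (schreier n) [coset_at (1, 1)] (coset_at (ray_start r)) (coset_at (ray_start r')).
Proof.
  intros Hr Hr' Hne (Hnot & k & Hk).
  assert (HE : forall C D, avoidE (schreier n) [coset_at (1, 1)] C D ->
    exists a b, Xn n a /\ Xn n b /\ C = coset_at a /\ D = coset_at b /\
      (point_adj a b /\ a <> (1, 1) /\ b <> (1, 1))).
  { intros C D (HCD & HC & HD). destruct (schreier_points n hn C D HCD) as (a & b & Xa & Xb & -> & -> & Hab).
    exists a, b. do 5 (split; [auto|]).
    split; intros ->; [apply HC|apply HD]; left; auto. }
  destruct (dist_le_pullback coset_at _ _ (Xn n) HE (fun a b Xa _ => coset_at_inj n hn a b Xa)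
    _ _ _ Hk (ray_start r) (Xn_ray_start r Hr) eq_refl) as (q & Xq & Eq & Hw).
  apply (coset_at_inj n hn) in Eq; [|apply Xn_ray_start; auto]. subst q.
  apply walk_off_base_same_ray in Hw.
  unfold ray_start in Hw. destruct (Nat.eqb_spec r 1); destruct (Nat.eqb_spec r' 1); simpl in Hw; lia.
Qed.

Lemma cosets_height_bound K : (forall v, In v K -> is_coset n v) ->
  exists D, forall a, Xn n a -> In (coset_at a) K -> snd a <= D.
Proof.
  induction K as [|C K IH]; intros HK; [exists 0; simpl; tauto|].
  destruct IH as [D HD]; [intros; apply HK; right; auto|].
  destruct (proj1 (is_coset_iff n hn C) (HK C (or_introl eq_refl))) as (p & Xp & ->).
  exists (max (snd p) D). intros a Xa [E|E].
  - apply (coset_at_inj n hn) in E; auto. subst; lia.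
  - specialize (HD a Xa E); lia.
Qed.

Definition reaches_ray_above (K : list (F -> Prop)) (D : nat) (x : F -> Prop) (r : nat) : Prop :=
  1 <= r <= n /\ exists q, Xn n q /\ fst q = r /\ D < snd q /\ comp_of (schreier n) K x (coset_at q).

(* A component that stays below height [D] is finite. *)
Lemma infinite_component_reaches_ray K D x :
  (forall a, Xn n a -> In (coset_at a) K -> snd a <= D) ->
  in_infinite_comp (is_coset n) (schreier n) K x -> exists r, reaches_ray_above K D x r.
Proof.
  intros HD (Px & xK & Hinf).
  apply (is_coset_iff n hn) in Px as (p & Xp & ->).
  apply NNPP. intros Hno. apply Hinf. exists (map coset_at (box n D)).
  intros y (_ & k & Hk).
  destruct (schreier_walk_points n hn (coset_at p) y k p) as (q & Xq & -> & _); auto.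
  { apply (dist_le_weaken (avoidE (schreier n) K)); [intros ? ? []; auto|auto]. }
  apply in_map. destruct q as [a m]. apply in_box. unfold Xn in Xq; simpl in Xq.
  split; [lia|]. split; [lia|]. destruct (le_lt_dec m D); auto. exfalso.
  apply Hno. exists a. split; [lia|]. exists (a, m). repeat (split; auto). exists k; auto.
Qed.

(* Above [K], each ray is a connected path avoiding [K]. *)
Lemma reaches_same_ray_connected K D x y r :
  (forall a, Xn n a -> In (coset_at a) K -> snd a <= D) ->
  reaches_ray_above K D x r -> reaches_ray_above K D y r -> comp_of (schreier n) K x y.
Proof.
  intros HD (Hr & [r0 m0] & Xq & Hq1 & Hq2 & (Hxk & k1 & Hk1)) (_ & [r1 m1] & Xq' & Hq1' & Hq2' & (_ & k2 & Hk2)).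
  simpl in Hq1, Hq2, Hq1', Hq2'. subst r0 r1. split; auto.
  assert (Hray : forall m, D < m ->
    dist_le (avoidE (schreier n) K) (coset_at (r, D + 1)) (coset_at (r, m)) (m - D - 1)).
  { intros m Hm. replace (coset_at (r, m)) with (coset_at (r, D + 1 + (m - D - 1))) by (do 3 f_equal; lia).
    apply ray_walk_avoiding; [lia|lia|intros i _ Hin].
    apply HD in Hin; [simpl in Hin; lia|unfold Xn; simpl; lia]. }
  exists (k1 + (m0 - D - 1) + ((m1 - D - 1) + k2)).
  apply dist_le_trans with (coset_at (r, D + 1)).
  - apply dist_le_trans with (coset_at (r, m0)); [auto|].
    apply dist_le_sym; [apply avoidE_sym|]. apply Hray; auto.
  - apply dist_le_trans with (coset_at (r, m1)); [apply Hray; auto|].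
    apply dist_le_sym; [apply avoidE_sym|auto].
Qed.

Theorem schreier_ends : has_ends (is_coset n) (schreier n) n.
Proof.
  split.
  - exists [coset_at (1, 1)].
    split; [intros v [<-|[]]; apply (is_coset_iff n hn); exists (1, 1); split; auto; apply (Xn_base n hn)|].
    exists (map (fun r => coset_at (ray_start r)) (seq 1 n)).
    split; [rewrite length_map, length_seq; auto|split].
    + intros x Hx. apply in_map_iff in Hx as (r & <- & Hr). apply in_seq in Hr.
      apply ray_component_infinite; lia.
    + apply ForallOrdPairs_map_seq. intros r r' Hr Hr'. apply rays_separated; lia.
  - intros K HK xs Hxs Hfop. destruct (cosets_height_bound K HK) as [D HD].
    rewrite <- (length_seq n 1).
    apply (ForallOrdPairs_length_le_colours Nat.eq_dec _ (reaches_ray_above K D) xs Hfop).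
    + intros x y r Hx Hy Hnc. apply Hnc. apply (reaches_same_ray_connected K D x y r); auto.
    + intros x Hx. destruct (infinite_component_reaches_ray K D x HD (Hxs x Hx)) as [r Hr].
      exists r; split; [apply in_seq; destruct Hr; lia|auto].
Qed.

Lemma point_adj_depth p q : point_adj p q -> tree_depth q <= tree_depth p + 1.
Proof.
  intros H. destruct (point_adj_tree_edge p q H) as [->|[[Hp ->]|[Hq ->]]]; [lia| |].
  - specialize (tree_depth_parent p Hp); lia.
  - specialize (tree_depth_parent q Hq); lia.
Qed.

Lemma point_walk_depth p q k : dist_le point_adj p q k -> tree_depth q <= tree_depth p + k.
Proof. induction 1 as [|x z y k Hxz H IH]; [lia|]. pose proof (point_adj_depth x z Hxz). lia. Qed.

(* The ball of radius [r] contains the first [r+1] points of ray 1 and lies in the box of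
   height [r+1]. *)
Theorem schreier_linear_growth : linear_growth (schreier n) (coset n idF).
Proof.
  rewrite (coset_id n). exists n. intros r. split.
  - exists (map (fun j => coset_at (1, 1 + j)) (seq 0 (S r))). split; [|split].
    + apply NoDup_map_NoDup_ForallPairs; [|apply seq_NoDup]. intros a b _ _ E.
      apply (coset_at_inj n hn) in E; [inversion E; lia|]. unfold Xn; simpl; lia.
    + rewrite length_map, length_seq; auto.
    + intros y Hy. apply in_map_iff in Hy as (j & <- & Hj). apply in_seq in Hj.
      apply dist_le_mono with j; [apply ray_walk; lia|lia].
  - intros l Hnd Hl. rewrite <- (box_length n (S r)), <- (length_map coset_at).
    apply NoDup_incl_length; auto. intros y Hy.
    destruct (schreier_walk_points n hn (coset_at (1, 1)) y r (1, 1)) as (q & Xq & -> & Hw);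
      auto; [apply (Xn_base n hn)|].
    apply in_map. apply point_walk_depth in Hw.
    destruct q as [a m]. unfold Xn in Xq; simpl in Xq. apply in_box. split; [lia|].
    unfold tree_depth, Xnb in Hw. simpl fst in Hw; simpl snd in Hw. revert Hw. crush.
Qed.

End SchreierGeometry.

(** * The stabiliser is not a virtual fiber *)

Definition rotation (P j : nat) : F := fun p => let (a, m) := p in
  if (a =? 1) && (1 <=? m) && (m <=? P) then (1, (m - 1 + j) mod P + 1) else p.

Section Rotation.
Variable P : nat.
Hypothesis HP : 1 <= P.

Lemma rotation_comp j k : comp (rotation P j) (rotation P k) = rotation P (j + k).
Proof.
  extensionality p. destruct p as [a m]. unfold comp, rotation.
  destruct ((a =? 1) && (1 <=? m) && (m <=? P)) eqn:C; [|rewrite C; reflexivity].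
  rewrite !andb_true_iff, Nat.eqb_eq, !Nat.leb_le in C.
  assert (Hlt : (m - 1 + k) mod P < P) by (apply Nat.mod_upper_bound; lia).
  replace ((1 =? 1) && (1 <=? (m - 1 + k) mod P + 1) && ((m - 1 + k) mod P + 1 <=? P)) with true
    by (symmetry; rewrite !andb_true_iff, Nat.eqb_eq, !Nat.leb_le; lia).
  do 2 f_equal. replace ((m - 1 + k) mod P + 1 - 1) with ((m - 1 + k) mod P) by lia.
  rewrite Nat.Div0.add_mod_idemp_l. f_equal. lia.
Qed.

Lemma rotation_mult k : rotation P (k * P) = idF.
Proof.
  extensionality p. destruct p as [a m]. unfold rotation, idF.
  destruct ((a =? 1) && (1 <=? m) && (m <=? P)) eqn:C; auto.
  rewrite !andb_true_iff, Nat.eqb_eq, !Nat.leb_le in C.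
  rewrite Nat.Div0.mod_add, Nat.mod_small by lia. f_equal; lia.
Qed.

Lemma rotation_base m : m < P -> rotation P m (1, 1) = (1, m + 1).
Proof.
  intros Hm. unfold rotation. replace ((1 =? 1) && (1 <=? 1) && (1 <=? P)) with true
    by (symmetry; rewrite !andb_true_iff, Nat.eqb_eq, !Nat.leb_le; lia).
  f_equal. f_equal. rewrite Nat.mod_small; lia.
Qed.

Lemma Gn_rotation n j : 1 <= n -> Gn n (rotation P j).
Proof.
  intros Hn. split.
  - apply (bij_Xn_of_inverse n _ (rotation P (j * (P - 1)))).
    + intros [a m] Xp. unfold rotation.
      destruct ((a =? 1) && (1 <=? m) && (m <=? P)); auto. unfold Xn; simpl; lia.
    + intros p. change (comp (rotation P j) (rotation P (j * (P - 1))) p = p).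
      rewrite rotation_comp. replace (j + j * (P - 1)) with (j * P) by nia.
      rewrite rotation_mult. reflexivity.
    + intros p. change (comp (rotation P (j * (P - 1))) (rotation P j) p = p).
      rewrite rotation_comp. replace (j * (P - 1) + j) with (j * P) by nia.
      rewrite rotation_mult. reflexivity.
    + intros [a m] Xp. unfold rotation.
      destruct ((a =? 1) && (1 <=? m) && (m <=? P)) eqn:C; auto.
      rewrite !andb_true_iff, Nat.eqb_eq, !Nat.leb_le in C. exfalso; apply Xp; unfold Xn; simpl; lia.
  - apply transl_at_infinity_iff. exists (fun _ => 0%Z), P. intros i m Hi Hm. unfold rotation.
    replace ((i =? 1) && (1 <=? m) && (m <=? P)) with false
      by (symmetry; rewrite !andb_false_iff, !Nat.leb_gt; lia).
    simpl; split; auto; lia.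
Qed.

Lemma fpow_rotation m k : fpow (rotation P m) k = rotation P (m * k).
Proof.
  induction k; simpl.
  - rewrite Nat.mul_0_r. symmetry; apply (rotation_mult 0).
  - rewrite IHk, rotation_comp. f_equal; lia.
Qed.

End Rotation.

(* Two of the [P] rotations by [0 .. P-1] lie in the same coset when [G'] has fewer than [P]
   cosets; their quotient is a nontrivial rotation in [G']. *)
Lemma finite_index_contains_rotation n (G' : F -> Prop) l :
  1 <= n -> is_subgroup (Gn n) G' -> (forall t, In t l -> Gn n t) ->
  (forall g, Gn n g -> exists t h, In t l /\ G' h /\ g = comp h t) ->
  exists m, 0 < m < S (length l) /\ G' (rotation (S (length l)) m).
Proof.
  intros hn (_ & _ & Gc & Ginv) Hl FI. set (P := S (length l)).
  assert (HP : 1 <= P) by (unfold P; lia).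
  assert (Hex : forall j, exists t, j < P -> In t l /\ exists h, G' h /\ rotation P j = comp h t).
  { intros j. destruct (FI (rotation P j)) as (t & h & Ht & Hh & E); [apply Gn_rotation; lia|].
    exists t; intros _; split; eauto. }
  set (coset_rep := fun j => proj1_sig (constructive_indefinite_description _ (Hex j))).
  assert (Hrep : forall j, j < P ->
    In (coset_rep j) l /\ exists h, G' h /\ rotation P j = comp h (coset_rep j)).
  { intros j Hj. unfold coset_rep. destruct (constructive_indefinite_description _ _) as (t & Ht); auto. }
  destruct (pigeonhole_seq coset_rep l P) as (i & j & Hij & Erep); [unfold P; lia|intros; apply Hrep; auto|].
  destruct (Hrep i ltac:(lia)) as (Hti & hi & Ghi & Ei).
  destruct (Hrep j ltac:(lia)) as (_ & hj & Ghj & Ej).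
  rewrite <- Erep in Ej. set (t := coset_rep i) in *.
  set (v := comp t (rotation P (P - i))).
  assert (Ev : comp hi v = idF).
  { unfold v. change (comp (comp hi t) (rotation P (P - i)) = idF).
    rewrite <- Ei, rotation_comp by auto. replace (i + (P - i)) with (1 * P) by lia.
    apply rotation_mult; auto. }
  assert (G'v : G' v) by (apply (Ginv hi v); auto; apply Gn_comp; [apply Hl|apply Gn_rotation]; auto).
  exists (j - i). split; [unfold P in *; lia|].
  replace (rotation P (j - i)) with (comp hj v); [apply Gc; auto|].
  unfold v. change (comp (comp hj t) (rotation P (P - i)) = rotation P (j - i)).
  rewrite <- Ej, rotation_comp by auto. replace (j + (P - i)) with ((j - i) + 1 * P) by lia.
  rewrite <- rotation_comp, rotation_mult by auto. reflexivity.
Qed.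

(* [Z] is torsion-free. *)
Lemma quotient_Z_torsion_in_kernel (G' H' : F -> Prop) f k :
  G' idF -> (forall f g, G' f -> G' g -> G' (comp f g)) ->
  quotient_is_Z G' H' -> G' f -> 0 < k -> fpow f k = idF -> H' f.
Proof.
  intros Gid Gc (phi & Hom & _ & Ker) Gf Hk Ek.
  assert (phi0 : phi idF = 0%Z).
  { assert (E := Hom idF idF Gid Gid). change (comp idF idF) with idF in E. lia. }
  assert (Hpow : forall j, G' (fpow f j) /\ phi (fpow f j) = (Z.of_nat j * phi f)%Z).
  { induction j as [|j [Gj Ej]]; [split; [auto|simpl; rewrite phi0; ring]|].
    split; [apply Gc; auto|]. change (fpow f (S j)) with (comp f (fpow f j)).
    rewrite Hom, Ej, Nat2Z.inj_succ by auto. ring. }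
  apply Ker; auto. destruct (Hpow k) as [_ E]. rewrite Ek, phi0 in E.
  symmetry in E. apply Z.mul_eq_0 in E as [E|E]; lia.
Qed.

Theorem Hn_not_virtual_fiber n : 1 <= n -> ~ virtual_fiber (Gn n) (Hn n).
Proof.
  intros hn (_ & G' & H' & SG & (l & Hl & FI) & (SH & _) & _ & _ & _ & HZ).
  destruct (finite_index_contains_rotation n G' l hn SG Hl FI) as (m & Hm & Gm).
  pose proof SG as (_ & Gid & Gc & _).
  assert (H'm : H' (rotation (S (length l)) m)).
  { apply (quotient_Z_torsion_in_kernel G' H' _ (S (length l))); auto; [lia|].
    rewrite fpow_rotation, rotation_mult; auto; lia. }
  apply SH in H'm as [_ Ebase]. rewrite rotation_base in Ebase by lia.
  injection Ebase. lia.
Qed.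

Theorem mainTheorem16 (n : nat) (hn : 2 <= n) :
  fin_gen (Hn n) /\
  group_iso (Hn n) (Gn n) /\
  (forall f, Gn n f ->
     Hn n f \/ exists h1 h2, Hn n h1 /\ Hn n h2 /\ f = comp h1 (comp (gen_g 1) h2)) /\
  quasi_tree (is_coset n) (schreier n) /\
  has_ends (is_coset n) (schreier n) n /\
  linear_growth (schreier n) (coset n idF) /\
  ~ virtual_fiber (Gn n) (Hn n).
Proof.
  split; [apply Hn_fin_gen; auto|].
  split; [apply Hn_iso_Gn; lia|].
  split; [apply Gn_double_cosets; auto|].
  split; [apply schreier_quasi_tree; auto|].
  split; [apply schreier_ends; auto|].
  split; [apply schreier_linear_growth; auto|].
  apply Hn_not_virtual_fiber; lia.
Qed.
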